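(* Let $N\ge1$ and assume $f\in C^{N+1}[a,b]$ with $\|f^{(N+1)}\|_{L^\infty(a,b)}\le C_f$; let $h_I=\max_k(a_k-a_{k-1})$. For each $k=1,\dots,K$ let $p_k=L_Ng_k$. Then there exists $\mathbf c_k^{\mathrm{int}}\in\mathbb C^{N+1}$ with $p_k=\mathcal L_N^{(T)}(\mathbf c_k^{\mathrm{int}})$, and \[ \|g_k-Q_{N,\epsilon}^{(T)}g_k\|_{L^2(\Lambda)}\le \|g_k-p_k\|_{L^2(\Lambda)}+\epsilon\|\mathbf c_k^{\mathrm{int}}\|_2\le \sqrt2\,\frac{h_I^{\,N+1}}{N^{\,N+1}}C_f+\epsilon\|\mathbf c_k^{\mathrm{int}}\|_2 . \] Consequently, \[ \|f-\mathcal P_{N,K}^{T,\epsilon}f\|_{L^2(I)}^2\le\sum_{k=1}^K s_k\Big(\sqrt2\,\frac{h_I^{\,N+1}}{N^{\,N+1}}C_f+\epsilon\|\mathbf c_k^{\mathrm{int}}\|_2\Big)^2 . \]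
   Context: $I=[a,b]$ with partition $a=a_0<\cdots<a_K=b$, $I_k=[a_{k-1},a_k]$, $c_k=\frac{a_{k-1}+a_k}{2}$, $s_k=\frac{a_k-a_{k-1}}{2}$, $\Lambda=[-1,1]$, $g_k(t)=f(c_k+s_kt)$ for $t\in\Lambda$. $L_Ng_k$ denotes the polynomial of degree at most $N$ interpolating $g_k$ at the equispaced nodes $t_j=-1+2j/N$, $j=0,\dots,N$. Fix $T>1$ and $\epsilon>0$. With $\{p_\ell\}$ the $L^2([-1,1])$-orthonormal Legendre polynomials, $P_\ell^{(T)}(t)=T^{-1/2}p_\ell(t/T)$, the synthesis operator is $\mathcal L_N^{(T)}:\mathbb C^{N+1}\to L^2(\Lambda)$, $\mathcal L_N^{(T)}(\mathbf c)=\sum_{\ell=0}^Nc_\ell P_\ell^{(T)}|_\Lambda$, with SVD $\mathcal L_N^{(T)}\mathbf c=\sum_j\sigma_j(v_j^*\mathbf c)u_j$ ($\sigma_j>0$, $\{v_j\}$ orthonormal in $\mathbb C^{N+1}$, $\{u_j\}$ orthonormal in $L^2(\Lambda)$). The TSVD operator is $Q_{N,\epsilon}^{(T)}g=\sum_{j:\sigma_j>\epsilon}\sigma_j^{-1}\langle g,u_j\rangle\,\mathcal L_N^{(T)}(v_j)$, and $(\mathcal P_{N,K}^{T,\epsilon}f)(x)=(Q_{N,\epsilon}^{(T)}g_k)\big(\frac{x-c_k}{s_k}\big)$ for $x\in I_k$. *)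

From Stdlib Require Import Reals.
From Coquelicot Require Import Coquelicot.

Open Scope R_scope.

Fixpoint csum (F : nat -> C) (n : nat) : C :=
  match n with O => RtoC 0 | S m => Cplus (csum F m) (F m) end.
Fixpoint rsum (F : nat -> R) (n : nat) : R :=
  match n with O => 0 | S m => rsum F m + F m end.
Fixpoint rprod (F : nat -> R) (n : nat) : R :=
  match n with O => 1 | S m => rprod F m * F m end.

Definition cont_within_ab (a b : R) (G : R -> R) (x : R) : Prop :=
  filterlim G (within (fun y => a <= y <= b) (locally x)) (locally (G x)).

Definition Cm_closed (m : nat) (a b : R) (F : R -> R) : Prop :=
  (forall x, a <= x <= b -> cont_within_ab a b F x) /\
  (forall k x, (k <= m)%nat -> a < x < b -> ex_derive_n F k x) /\
  (forall k, (k <= m)%nat -> exists G : R -> R,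
      (forall x, a <= x <= b -> cont_within_ab a b G x) /\
      (forall x, a < x < b -> G x = Derive_n F k x)).

Definition Cm_closed_C (m : nat) (a b : R) (f : R -> C) : Prop :=
  Cm_closed m a b (fun x => Re (f x)) /\ Cm_closed m a b (fun x => Im (f x)).

Definition DeriveC_n (f : R -> C) (k : nat) (x : R) : C :=
  (Derive_n (fun y => Re (f y)) k x, Derive_n (fun y => Im (f y)) k x).

Definition cint_Lambda (h : R -> C) : C :=
  (RInt (fun t => Re (h t)) (-1) 1, RInt (fun t => Im (h t)) (-1) 1).
Definition L2dot (g u : R -> C) : C :=
  cint_Lambda (fun t => Cmult (g t) (Cconj (u t))).
Definition L2norm (h : R -> C) : R :=
  sqrt (RInt (fun t => Cmod (h t) ^ 2) (-1) 1).

(* ---------- vectors in C^{N+1} (entries 0..N of c : nat -> C) ---------- *)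
Definition vdot (N : nat) (v c : nat -> C) : C :=
  csum (fun l => Cmult (Cconj (v l)) (c l)) (S N).
Definition vnorm (N : nat) (c : nat -> C) : R :=
  sqrt (rsum (fun l => Cmod (c l) ^ 2) (S N)).

(* legP2 n t = (P_n t, P_{n+1} t), standard Legendre polynomials via
   (n+2) P_{n+2} = (2n+3) t P_{n+1} - (n+1) P_n, P_0 = 1, P_1 = t *)
Fixpoint legP2 (n : nat) (t : R) : R * R :=
  match n with
  | O => (1, t)
  | S m => let (p, q) := legP2 m t in
           (q, ((2 * INR m + 3) * t * q - (INR m + 1) * p) / (INR m + 2))
  end.
Definition legendre (n : nat) (t : R) : R := fst (legP2 n t).
(* L^2([-1,1])-orthonormal Legendre polynomial p_l *)
Definition legendre_on (l : nat) (t : R) : R :=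
  sqrt ((2 * INR l + 1) / 2) * legendre l t.
Definition legT (T : R) (l : nat) (t : R) : R :=
  / sqrt T * legendre_on l (t / T).

Definition synth (N : nat) (T : R) (c : nat -> C) (t : R) : C :=
  csum (fun l => Cmult (c l) (RtoC (legT T l t))) (S N).

Definition is_SVD (N : nat) (T : R) (r : nat) (sig : nat -> R)
  (v : nat -> nat -> C) (u : nat -> R -> C) : Prop :=
  (forall j, (j < r)%nat -> 0 < sig j) /\
  (forall i j, (i < r)%nat -> (j < r)%nat ->
      vdot N (v i) (v j) = RtoC (if Nat.eqb i j then 1 else 0)) /\
  (forall i j, (i < r)%nat -> (j < r)%nat ->
      L2dot (u i) (u j) = RtoC (if Nat.eqb i j then 1 else 0)) /\
  (forall (c : nat -> C) (t : R), -1 <= t <= 1 ->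
      synth N T c t =
      csum (fun j => Cmult (RtoC (sig j)) (Cmult (vdot N (v j) c) (u j t))) r).

Definition TSVD (N : nat) (T eps : R) (r : nat) (sig : nat -> R)
  (v : nat -> nat -> C) (u : nat -> R -> C) (g : R -> C) (t : R) : C :=
  csum (fun j => if Rlt_dec eps (sig j)
                 then Cmult (RtoC (/ sig j)) (Cmult (L2dot g (u j)) (synth N T (v j) t))
                 else RtoC 0) r.

Definition node (N j : nat) : R := -1 + 2 * INR j / INR N.
Definition interpN (N : nat) (g : R -> C) (t : R) : C :=
  csum (fun j => Cmult (g (node N j))
          (RtoC (rprod (fun i => if Nat.eqb i j then 1
                                  else (t - node N i) / (node N j - node N i)) (S N))))
       (S N).

Definition ck (ap : nat -> R) (k : nat) : R := (ap (k - 1)%nat + ap k) / 2.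
Definition sk (ap : nat -> R) (k : nat) : R := (ap k - ap (k - 1)%nat) / 2.
Definition gk (f : R -> C) (ap : nat -> R) (k : nat) (t : R) : C :=
  f (ck ap k + sk ap k * t).
Fixpoint hI (ap : nat -> R) (K : nat) : R :=
  match K with
  | O => 0
  | S O => ap 1%nat - ap 0%nat
  | S m => Rmax (hI ap m) (ap K - ap m)
  end.
(* index k of the subinterval I_k containing x (the leftmost one at breakpoints) *)
Fixpoint seg_index (ap : nat -> R) (K : nat) (x : R) : nat :=
  match K with
  | O => O
  | S O => 1%nat
  | S m => if Rle_dec x (ap m) then seg_index ap m x else K
  end.

Definition Pfrm (N : nat) (T eps : R) (r : nat) (sig : nat -> R)
  (v : nat -> nat -> C) (u : nat -> R -> C)
  (f : R -> C) (ap : nat -> R) (K : nat) (x : R) : C :=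
  let k := seg_index ap K x in
  TSVD N T eps r sig v u (gk f ap k) ((x - ck ap k) / sk ap k).

(* On each subinterval, the interpolant [p_k = L_N g_k] has degree at most [N], and the
   [P_l^(T)] have exact degree [l], so [p_k = L_N^(T) c] for some coefficient vector [c].
   For [z = g_k - p_k], the TSVD residual [g_k - Q g_k] is the part of [z] orthogonal to the
   retained left singular vectors plus the part of [p_k] along the discarded ones; Bessel's
   inequality in [L^2(Lambda)] and in [C^(N+1)] bounds these by [||z||] and [eps ||c||].
   The interpolation error is controlled pointwise by Cauchy's remainder formula together with
   [|prod_i (t - t_i)| <= N! (2/N)^(N+1)], applied to the real and imaginary parts of [g_k].
   Finally, the substitution [x = c_k + s_k t] turns the squared [L^2(I)] error into
   [sum_k s_k ||g_k - Q g_k||^2]. *)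

From Stdlib Require Import Reals Lra Lia Factorial ClassicalEpsilon.
From Coquelicot Require Import Coquelicot.

Open Scope R_scope.

Lemma rsum_ext F G n : (forall i, (i < n)%nat -> F i = G i) -> rsum F n = rsum G n.
Proof. induction n as [|n IH]; intros H; simpl; auto. rewrite IH, H; auto. Qed.

Lemma rsum_plus F G n : rsum (fun i => F i + G i) n = rsum F n + rsum G n.
Proof. induction n as [|n IH]; simpl; [lra | rewrite IH; lra]. Qed.

Lemma rsum_scal c F n : rsum (fun i => c * F i) n = c * rsum F n.
Proof. induction n as [|n IH]; simpl; [lra | rewrite IH; lra]. Qed.

Lemma rsum_le F G n : (forall i, (i < n)%nat -> F i <= G i) -> rsum F n <= rsum G n.
Proof.
  induction n as [|n IH]; intros H; simpl; [lra|].
  apply Rplus_le_compat; [apply IH; intros; apply H|apply H]; lia.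
Qed.

Lemma rsum_ge0 F n : (forall i, (i < n)%nat -> 0 <= F i) -> 0 <= rsum F n.
Proof.
  induction n as [|n IH]; intros H; simpl; [lra|].
  apply Rplus_le_le_0_compat; [apply IH; intros; apply H|apply H]; lia.
Qed.

Lemma rsum_shift F n : rsum F (S n) = F 0%nat + rsum (fun i => F (S i)) n.
Proof. induction n as [|n IH]; simpl in *; [lra | rewrite IH; lra]. Qed.

Lemma csum_ext F G n : (forall i, (i < n)%nat -> F i = G i) -> csum F n = csum G n.
Proof. induction n as [|n IH]; intros H; simpl; auto. rewrite IH, H; auto. Qed.

Lemma Re_csum F n : fst (csum F n) = rsum (fun i => fst (F i)) n.
Proof. induction n as [|n IH]; simpl; auto. rewrite IH; auto. Qed.

Lemma Im_csum F n : snd (csum F n) = rsum (fun i => snd (F i)) n.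
Proof. induction n as [|n IH]; simpl; auto. rewrite IH; auto. Qed.

Lemma csum_plus F G n : csum (fun i => Cplus (F i) (G i)) n = Cplus (csum F n) (csum G n).
Proof. induction n as [|n IH]; simpl; [|rewrite IH]; ring. Qed.

Lemma csum_scal c F n : csum (fun i => Cmult c (F i)) n = Cmult c (csum F n).
Proof. induction n as [|n IH]; simpl; [|rewrite IH]; ring. Qed.

Lemma csum_opp F n : csum (fun i => Copp (F i)) n = Copp (csum F n).
Proof. induction n as [|n IH]; simpl; [|rewrite IH]; ring. Qed.

Lemma csum_conj F n : Cconj (csum F n) = csum (fun i => Cconj (F i)) n.
Proof.
  induction n as [|n IH]; simpl; [|rewrite <- IH];
    apply injective_projections; simpl; ring.
Qed.

Lemma csum_zero n : csum (fun _ => 0%C) n = 0%C.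
Proof. induction n as [|n IH]; simpl; [|rewrite IH]; ring. Qed.

Lemma csum_delta (F : nat -> C) n i : (i < n)%nat ->
  (forall j, (j < n)%nat -> j <> i -> F j = 0%C) -> csum F n = F i.
Proof.
  induction n as [|n IH]; intros Hi H; [lia|]. simpl. destruct (Nat.eq_dec i n) as [->|Hne].
  - rewrite (csum_ext _ (fun _ => 0%C)), csum_zero; [ring|]. intros; apply H; lia.
  - rewrite IH, (H n); [ring|lia|auto|lia|intros; apply H; lia].
Qed.

Lemma rsum_delta F n i : (i < n)%nat -> (forall j, (j < n)%nat -> j <> i -> F j = 0) ->
  rsum F n = F i.
Proof.
  intros Hi H. change (F i) with (fst (RtoC (F i))).
  rewrite <- (csum_delta (fun j => RtoC (F j)) n i), Re_csum; auto.
  intros j Hj Hji. rewrite H; auto.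
Qed.

Lemma rprod_ext F G n : (forall i, (i < n)%nat -> F i = G i) -> rprod F n = rprod G n.
Proof. induction n as [|n IH]; intros H; simpl; auto. rewrite IH, H; auto. Qed.

Lemma rprod_shift F n : rprod F (S n) = F 0%nat * rprod (fun i => F (S i)) n.
Proof. induction n as [|n IH]; simpl in *; [ring | rewrite IH; ring]. Qed.

Lemma rprod_eq0 F n i : (i < n)%nat -> F i = 0 -> rprod F n = 0.
Proof.
  induction n as [|n IH]; intros Hi H; [lia|]. simpl.
  destruct (Nat.eq_dec i n) as [->|]; [rewrite H | rewrite IH]; auto; [ring|ring|lia].
Qed.

Lemma rprod_neq0 F n : (forall i, (i < n)%nat -> F i <> 0) -> rprod F n <> 0.
Proof.
  induction n as [|n IH]; intros H; simpl; [lra|].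
  apply Rmult_integral_contrapositive; split; [apply IH|apply H]; auto.
Qed.

Lemma rprod_eq1 F n : (forall i, (i < n)%nat -> F i = 1) -> rprod F n = 1.
Proof. induction n as [|n IH]; intros H; simpl; auto. rewrite IH, H; [ring|lia|auto]. Qed.

Lemma rprod_ge0 F n : (forall i, (i < n)%nat -> 0 <= F i) -> 0 <= rprod F n.
Proof.
  induction n as [|n IH]; intros H; simpl; [lra|].
  apply Rmult_le_pos; [apply IH|apply H]; auto.
Qed.

Lemma Rabs_rprod F n : Rabs (rprod F n) = rprod (fun i => Rabs (F i)) n.
Proof. induction n as [|n IH]; simpl; [apply Rabs_R1 | rewrite Rabs_mult, IH; auto]. Qed.

Lemma rprod_scal c F n : rprod (fun i => c * F i) n = c ^ n * rprod F n.
Proof. induction n as [|n IH]; simpl; [ring | rewrite IH; ring]. Qed.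

Lemma Cmod_sqr (z : C) : Cmod z ^ 2 = fst z * fst z + snd z * snd z.
Proof. unfold Cmod. rewrite pow2_sqrt; simpl; nra. Qed.

Lemma Rabs_Re_le_Cmod (z : C) : Rabs (fst z) <= Cmod z.
Proof. unfold Cmod. rewrite <- sqrt_Rsqr_abs. apply sqrt_le_1_alt. unfold Rsqr. simpl. nra. Qed.

Lemma Rabs_Im_le_Cmod (z : C) : Rabs (snd z) <= Cmod z.
Proof. unfold Cmod. rewrite <- sqrt_Rsqr_abs. apply sqrt_le_1_alt. unfold Rsqr. simpl. nra. Qed.

Lemma Cmod_le_Rabs_Re_Im (z : C) : Cmod z <= Rabs (fst z) + Rabs (snd z).
Proof.
  unfold Cmod. apply Rsqr_incr_0_var; [|apply Rplus_le_le_0_compat; apply Rabs_pos].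
  unfold Rsqr. rewrite sqrt_sqrt; [|nra]. simpl.
  assert (0 <= Rabs (fst z) * Rabs (snd z)) by (apply Rmult_le_pos; apply Rabs_pos).
  assert (fst z * fst z = Rabs (fst z) * Rabs (fst z)) by (rewrite <- Rabs_mult, Rabs_pos_eq; nra).
  assert (snd z * snd z = Rabs (snd z) * Rabs (snd z)) by (rewrite <- Rabs_mult, Rabs_pos_eq; nra).
  nra.
Qed.

Definition peval (a : nat -> R) (n : nat) (t : R) : R := rsum (fun i => a i * t ^ i) (S n).

Definition is_poly_lc (n : nat) (c : R) (q : R -> R) : Prop :=
  exists a, a n = c /\ forall t, q t = peval a n t.

Definition is_poly (n : nat) (q : R -> R) : Prop := exists c, is_poly_lc n c q.

Lemma is_poly_lc_poly n c q : is_poly_lc n c q -> is_poly n q.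
Proof. exists c; auto. Qed.

Lemma is_poly_lc_ext n c q q' : (forall t, q t = q' t) -> is_poly_lc n c q -> is_poly_lc n c q'.
Proof. intros E [a [Ha Hq]]. exists a; split; auto. intros; rewrite <- E; auto. Qed.

Lemma is_poly_ext n q q' : (forall t, q t = q' t) -> is_poly n q -> is_poly n q'.
Proof. intros E [c Hq]. exists c. eapply is_poly_lc_ext; eauto. Qed.

Lemma is_poly_lc_lower n q : is_poly_lc (S n) 0 q -> is_poly n q.
Proof.
  intros [a [Ha Hq]]. exists (a n), a. split; auto. intros t.
  rewrite Hq. unfold peval. change (rsum ?F (S (S n))) with (rsum F (S n) + F (S n)).
  cbv beta. rewrite Ha. ring.
Qed.

Lemma is_poly_raise n q : is_poly n q -> is_poly_lc (S n) 0 q.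
Proof.
  intros [c [a [_ Hq]]]. exists (fun i => if Nat.eqb i (S n) then 0 else a i).
  rewrite Nat.eqb_refl. split; auto. intros t. rewrite Hq. unfold peval.
  change (rsum ?F (S (S n))) with (rsum F (S n) + F (S n)). cbv beta.
  rewrite Nat.eqb_refl, Rmult_0_l, Rplus_0_r.
  apply rsum_ext. intros i Hi. destruct (Nat.eqb_spec i (S n)); [lia|auto].
Qed.

Lemma is_poly_lc_lin n c1 c2 q1 q2 al be : is_poly_lc n c1 q1 -> is_poly_lc n c2 q2 ->
  is_poly_lc n (al * c1 + be * c2) (fun t => al * q1 t + be * q2 t).
Proof.
  intros [a1 [E1 H1]] [a2 [E2 H2]]. exists (fun i => al * a1 i + be * a2 i).
  rewrite E1, E2. split; auto. intros t. rewrite H1, H2. unfold peval.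
  rewrite <- !rsum_scal, <- rsum_plus. apply rsum_ext; intros; ring.
Qed.

Lemma is_poly_lin n q1 q2 al be : is_poly n q1 -> is_poly n q2 ->
  is_poly n (fun t => al * q1 t + be * q2 t).
Proof. intros [c1 H1] [c2 H2]. eexists. apply is_poly_lc_lin; eauto. Qed.

Lemma is_poly_scal n k q : is_poly n q -> is_poly n (fun t => k * q t).
Proof.
  intros H. apply is_poly_ext with (fun t => k * q t + 0 * q t); [intros; ring|].
  apply is_poly_lin; auto.
Qed.

Lemma is_poly_lc_const c : is_poly_lc 0 c (fun _ => c).
Proof. exists (fun _ => c). split; auto. intros; unfold peval; simpl; ring. Qed.

Lemma is_poly_le n m q : (n <= m)%nat -> is_poly n q -> is_poly m q.
Proof. induction 1; auto. intros Hq. eapply is_poly_lc_poly, is_poly_raise; auto. Qed.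

Lemma is_poly_const n c : is_poly n (fun _ => c).
Proof. apply (is_poly_le 0); [lia|]. eapply is_poly_lc_poly, is_poly_lc_const. Qed.

Lemma is_poly_rsum n F m : (forall j, (j < m)%nat -> is_poly n (F j)) ->
  is_poly n (fun t => rsum (fun j => F j t) m).
Proof.
  induction m as [|m IH]; intros H; simpl; [apply is_poly_const|].
  apply is_poly_ext with (fun t => 1 * rsum (fun j => F j t) m + 1 * F m t); [intros; ring|].
  apply is_poly_lin; auto.
Qed.

Lemma is_poly_lc_mul_id n c q : is_poly_lc n c q -> is_poly_lc (S n) c (fun t => t * q t).
Proof.
  intros [a [E H]]. exists (fun i => match i with O => 0 | S j => a j end). split; auto.
  intros t. rewrite H. unfold peval. rewrite (rsum_shift _ (S n)), <- rsum_scal.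
  simpl (_ * t ^ 0). rewrite Rmult_0_l, Rplus_0_l. apply rsum_ext; intros; simpl; ring.
Qed.

Lemma is_poly_mul_affine n q al be : is_poly n q -> is_poly (S n) (fun t => q t * (al * t + be)).
Proof.
  intros [c H]. exists (al * c + be * 0).
  apply is_poly_lc_ext with (fun t => al * (t * q t) + be * q t); [intros; ring|].
  apply is_poly_lc_lin; [apply is_poly_lc_mul_id; auto|apply is_poly_raise; exists c; auto].
Qed.

Lemma is_poly_lc_dilate n c q T : T <> 0 ->
  is_poly_lc n c q -> is_poly_lc n (c / T ^ n) (fun t => q (t / T)).
Proof.
  intros HT [a [E H]]. exists (fun i => a i / T ^ i). rewrite E. split; auto.
  intros t. rewrite H. unfold peval. apply rsum_ext. intros i _.
  unfold Rdiv. rewrite Rpow_mult_distr, pow_inv. ring.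
Qed.

Lemma is_derive_peval a n t :
  is_derive (peval a (S n)) t (peval (fun i => INR (S i) * a (S i)) n t).
Proof.
  induction n as [|n IH].
  - eapply is_derive_ext with (fun x => a 0%nat + a 1%nat * x).
    { intros x. unfold peval; simpl; ring. }
    auto_derive; auto. unfold peval; simpl; ring.
  - eapply is_derive_ext with (fun x => peval a (S n) x + a (S (S n)) * x ^ S (S n)).
    { intros x. reflexivity. }
    replace (peval (fun i => INR (S i) * a (S i)) (S n) t) with
      (peval (fun i => INR (S i) * a (S i)) n t + a (S (S n)) * (INR (S (S n)) * 1 * t ^ (S n)))
      by (unfold peval; change (rsum ?F (S (S n))) with (rsum F (S n) + F (S n)); simpl; ring).
    apply (is_derive_plus (peval a (S n)) (fun x => a (S (S n)) * x ^ S (S n))); [exact IH|].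
    auto_derive; auto. simpl; ring.
Qed.

Lemma is_poly_lc_derive n c q : is_poly_lc (S n) c q ->
  exists q', is_poly_lc n (INR (S n) * c) q' /\ forall t, is_derive q t (q' t).
Proof.
  intros [a [E H]]. exists (peval (fun i => INR (S i) * a (S i)) n). split.
  - exists (fun i => INR (S i) * a (S i)). rewrite E. auto.
  - intros t. eapply is_derive_ext; [|apply is_derive_peval]. intros; rewrite H; auto.
Qed.

Lemma Derive_n_S f k x : Derive_n f (S k) x = Derive_n (Derive f) k x.
Proof. induction k in x |- *; simpl; auto. apply Derive_ext. intros; rewrite <- IHk; auto. Qed.

Lemma ex_derive_n_S f k x : ex_derive f x -> ex_derive_n (Derive f) k x -> ex_derive_n f (S k) x.
Proof.
  destruct k; simpl; auto. intros _ H.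
  eapply ex_derive_ext; [|exact H]. intros; rewrite <- Derive_n_S; auto.
Qed.

Lemma ex_derive_n_S_inv f k x : ex_derive_n f (S k) x -> ex_derive_n (Derive f) k x.
Proof.
  destruct k; simpl; auto. intros H.
  eapply ex_derive_ext; [|exact H]. intros; rewrite <- Derive_n_S; auto.
Qed.

Lemma is_poly_smooth n q : is_poly n q ->
  (forall k t, ex_derive_n q k t) /\ (forall k t, (n < k)%nat -> Derive_n q k t = 0).
Proof.
  revert q; induction n as [|n IH]; intros q [c Hq].
  - destruct Hq as [a [_ H]].
    assert (Hc : forall t, q t = a 0%nat) by (intros; rewrite H; unfold peval; simpl; ring).
    assert (D0 : forall k t, Derive_n q (S k) t = 0).
    { intros k t. rewrite Derive_n_S, (Derive_n_ext _ (fun _ => 0)).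
      - destruct k; [reflexivity|apply Derive_n_const].
      - intros y. rewrite <- (Derive_const (a 0%nat) y). apply Derive_ext. auto. }
    split; [|intros [|k] t Hk; [lia|apply D0]].
    intros [|k] t; simpl; [auto|]. destruct k.
    + apply (ex_derive_ext (fun _ => a 0%nat)); [intros; rewrite Hc; auto|apply ex_derive_const].
    + apply (ex_derive_ext (fun _ => 0)); [intros; rewrite D0; auto|apply ex_derive_const].
  - destruct (is_poly_lc_derive _ _ _ Hq) as [q' [L' D]].
    destruct (IH q' (is_poly_lc_poly _ _ _ L')) as [IH1 IH2].
    assert (DE : forall t, Derive q t = q' t) by (intros; apply is_derive_unique; auto).
    split.
    + intros [|k] t; simpl; auto. apply ex_derive_n_S; [eexists; apply D|].
      eapply ex_derive_n_ext; [intros; symmetry; apply DE|]. auto.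
    + intros [|k] t Hk; [lia|]. rewrite Derive_n_S, (Derive_n_ext _ q'); auto. apply IH2; lia.
Qed.

Lemma is_poly_lc_Derive_n n c q : is_poly_lc n c q -> forall t, Derive_n q n t = c * INR (fact n).
Proof.
  revert c q; induction n as [|n IH]; intros c q L t.
  - destruct L as [a [E H]]. simpl. rewrite H. unfold peval; simpl. rewrite E; ring.
  - destruct (is_poly_lc_derive _ _ _ L) as [q' [L' D]].
    rewrite Derive_n_S, (Derive_n_ext _ q'), (IH _ _ L'); [|intros; apply is_derive_unique; auto].
    change (fact (S n)) with (S n * fact n)%nat. rewrite mult_INR. ring.
Qed.

Lemma is_poly_continuous n q : is_poly n q -> forall t, continuous q t.
Proof.
  intros Hq t. apply (ex_derive_continuous (K:=R_AbsRing) (V:=R_NormedModule)).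
  generalize (proj1 (is_poly_smooth _ _ Hq) 1%nat t). apply ex_derive_ext. auto.
Qed.

Lemma legP2_S_fst m t : fst (legP2 (S m) t) = snd (legP2 m t).
Proof. simpl. destruct (legP2 m t); reflexivity. Qed.

Lemma legP2_S_snd m t : snd (legP2 (S m) t) =
  ((2 * INR m + 3) * t * snd (legP2 m t) - (INR m + 1) * fst (legP2 m t)) / (INR m + 2).
Proof. simpl. destruct (legP2 m t); reflexivity. Qed.

Lemma legP2_lc_pos n : exists al be, 0 < al /\ 0 < be /\
  is_poly_lc n al (fun t => fst (legP2 n t)) /\ is_poly_lc (S n) be (fun t => snd (legP2 n t)).
Proof.
  induction n as [|n [al [be [Hal [Hbe [L1 L2]]]]]].
  - exists 1, 1. repeat split; try lra; [apply is_poly_lc_const|].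
    apply is_poly_lc_ext with (fun t => t * 1); [intros; simpl; ring|].
    apply is_poly_lc_mul_id, is_poly_lc_const.
  - assert (Hn := pos_INR n).
    exists be, ((2 * INR n + 3) / (INR n + 2) * be + (- (INR n + 1) / (INR n + 2)) * 0).
    split; [|split; [|split]]; auto.
    + rewrite Rmult_0_r, Rplus_0_r. apply Rmult_lt_0_compat; auto. apply Rdiv_lt_0_compat; lra.
    + apply is_poly_lc_ext with (fun t => snd (legP2 n t)); auto.
      intros; rewrite legP2_S_fst; auto.
    + apply is_poly_lc_ext with (fun t => (2 * INR n + 3) / (INR n + 2) * (t * snd (legP2 n t))
                                      + (- (INR n + 1) / (INR n + 2)) * fst (legP2 n t)).
      { intros; rewrite legP2_S_snd. field. lra. }
      apply is_poly_lc_lin; [apply is_poly_lc_mul_id; auto|].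
      apply is_poly_raise. apply (is_poly_le n); [lia|]. exists al; auto.
Qed.

Lemma is_poly_lc_scal n c q k : is_poly_lc n c q -> is_poly_lc n (k * c) (fun t => k * q t).
Proof.
  intros L. apply is_poly_lc_ext with (fun t => k * q t + 0 * q t); [intros; ring|].
  replace (k * c) with (k * c + 0 * c) by ring. apply is_poly_lc_lin; auto.
Qed.

Lemma legT_lc T l : 0 < T -> exists c, c <> 0 /\ is_poly_lc l c (legT T l).
Proof.
  intros HT. destruct (legP2_lc_pos l) as [al [_ [Hal [_ [L _]]]]].
  assert (Hs : 0 < sqrt ((2 * INR l + 1) / 2)) by (apply sqrt_lt_R0; generalize (pos_INR l); lra).
  assert (HsT : 0 < / sqrt T) by (apply Rinv_0_lt_compat, sqrt_lt_R0; auto).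
  assert (HTl : 0 < T ^ l) by (apply pow_lt; auto).
  exists (/ sqrt T * sqrt ((2 * INR l + 1) / 2) * (al / T ^ l)). split.
  - apply Rgt_not_eq. repeat apply Rmult_lt_0_compat; auto. apply Rinv_0_lt_compat; auto.
  - apply is_poly_lc_ext with (fun t => / sqrt T * sqrt ((2 * INR l + 1) / 2) * fst (legP2 l (t / T))).
    { intros; unfold legT, legendre_on, legendre; ring. }
    apply is_poly_lc_scal, (is_poly_lc_dilate l al (fun t => fst (legP2 l t))); auto; lra.
Qed.

Lemma legT_poly T N l : 0 < T -> (l <= N)%nat -> is_poly N (legT T l).
Proof. intros HT Hl. destruct (legT_lc T l HT) as [c [_ L]]. apply (is_poly_le l); auto. exists c; auto. Qed.

(* The [P_l^(T)] have exact degree [l], so they span the polynomials of degree at most [n]. *)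
Lemma legT_span T n q : 0 < T -> is_poly n q ->
  exists c : nat -> R, forall t, q t = rsum (fun l => c l * legT T l t) (S n).
Proof.
  intros HT. revert q. induction n as [|n IH]; intros q [cq Lq].
  - destruct (legT_lc T 0 HT) as [g [Hg [b [Eb Hb]]]]. destruct Lq as [a [Ea Ha]].
    exists (fun _ => a 0%nat / g). intros t. simpl. rewrite Ha, Hb. unfold peval; simpl. rewrite Eb. field; auto.
  - destruct (legT_lc T (S n) HT) as [g [Hg Lg]].
    assert (L0 : is_poly_lc (S n) 0 (fun t => 1 * q t + (- (cq / g)) * legT T (S n) t)).
    { replace 0 with (1 * cq + (- (cq / g)) * g) by (field; auto). apply is_poly_lc_lin; auto. }
    destruct (IH _ (is_poly_lc_lower _ _ L0)) as [c Hc].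
    exists (fun l => if Nat.eqb l (S n) then cq / g else c l). intros t.
    change (rsum ?F (S (S n))) with (rsum F (S n) + F (S n)). cbv beta. rewrite Nat.eqb_refl.
    rewrite (rsum_ext _ (fun l => c l * legT T l t)), <- Hc; [ring|].
    intros i Hi. destruct (Nat.eqb_spec i (S n)); [lia|auto].
Qed.

Lemma Re_synth N T c t : fst (synth N T c t) = rsum (fun l => fst (c l) * legT T l t) (S N).
Proof. unfold synth. rewrite Re_csum. apply rsum_ext. intros; simpl; ring. Qed.

Lemma Im_synth N T c t : snd (synth N T c t) = rsum (fun l => snd (c l) * legT T l t) (S N).
Proof. unfold synth. rewrite Im_csum. apply rsum_ext. intros; simpl; ring. Qed.

Lemma synth_poly N T c : 0 < T ->
  is_poly N (fun t => fst (synth N T c t)) /\ is_poly N (fun t => snd (synth N T c t)).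
Proof.
  intros HT. split; [eapply is_poly_ext; [intros; symmetry; apply Re_synth|]
                   |eapply is_poly_ext; [intros; symmetry; apply Im_synth|]];
  apply (is_poly_rsum N (fun l t => _ * legT T l t)); intros;
  apply is_poly_scal, legT_poly; auto; lia.
Qed.

Definition lagrange_factor (N j : nat) (t : R) (i : nat) : R :=
  if Nat.eqb i j then 1 else (t - node N i) / (node N j - node N i).
Definition lagrange_basis (N j : nat) (t : R) : R := rprod (lagrange_factor N j t) (S N).
Definition lagrange_interp (N : nat) (G : R -> R) (t : R) : R :=
  rsum (fun j => G (node N j) * lagrange_basis N j t) (S N).
Definition node_poly (N : nat) (t : R) : R := rprod (fun i => t - node N i) (S N).


(* The trivial factor [j] does not raise the degree. *)
Lemma lagrange_partial_poly N j m :
  is_poly (if Nat.ltb j m then (m - 1)%nat else m) (fun t => rprod (lagrange_factor N j t) m).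
Proof.
  induction m as [|m IH]; simpl rprod; [apply is_poly_const|]. unfold lagrange_factor at 2.
  destruct (Nat.eqb_spec m j) as [->|Hmj].
  - rewrite (proj2 (Nat.ltb_lt j (S j))), (proj2 (Nat.ltb_ge j j)) in *; try lia.
    replace (S j - 1)%nat with j by lia. eapply is_poly_ext; [|exact IH]. intros; simpl; ring.
  - replace (if Nat.ltb j (S m) then (S m - 1)%nat else S m)
      with (S (if Nat.ltb j m then (m - 1)%nat else m))
      by (destruct (Nat.ltb_spec j m); destruct (Nat.ltb_spec j (S m)); lia).
    apply is_poly_ext with (fun t => rprod (lagrange_factor N j t) m *
      (/ (node N j - node N m) * t + (- node N m / (node N j - node N m)))).
    { intros; unfold Rdiv; ring. }
    apply is_poly_mul_affine; auto.
Qed.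

Lemma lagrange_basis_poly N j : (j <= N)%nat -> is_poly N (lagrange_basis N j).
Proof.
  intros Hj. generalize (lagrange_partial_poly N j (S N)).
  rewrite (proj2 (Nat.ltb_lt j (S N))); [|lia]. replace (S N - 1)%nat with N by lia. auto.
Qed.

Lemma lagrange_interp_poly N G : is_poly N (lagrange_interp N G).
Proof.
  apply (is_poly_rsum N (fun j t => G (node N j) * lagrange_basis N j t)).
  intros j Hj. apply is_poly_scal, lagrange_basis_poly; lia.
Qed.

Lemma node_poly_lc N : is_poly_lc (S N) 1 (node_poly N).
Proof.
  unfold node_poly. generalize (S N). intros m. induction m as [|m IH]; [apply is_poly_lc_const|].
  simpl rprod. apply is_poly_lc_ext with
    (fun t => 1 * (t * rprod (fun i => t - node N i) m) + (- node N m) * rprod (fun i => t - node N i) m).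
  { intros; ring. }
  replace 1 with (1 * 1 + - node N m * 0) at 1 by ring.
  apply is_poly_lc_lin; [apply is_poly_lc_mul_id; auto|apply is_poly_raise; exists 1; auto].
Qed.

Lemma node_lt N i : (1 <= N)%nat -> node N i < node N (S i).
Proof.
  intros HN. assert (0 < INR N) by (apply lt_0_INR; lia).
  unfold node. rewrite S_INR. apply Rplus_lt_compat_l.
  unfold Rdiv. apply Rmult_lt_compat_r; [apply Rinv_0_lt_compat|]; lra.
Qed.

Lemma node_0 N : node N 0 = -1.
Proof. unfold node. simpl. unfold Rdiv. ring. Qed.

Lemma node_N N : (1 <= N)%nat -> node N N = 1.
Proof. intros. unfold node. assert (0 < INR N) by (apply lt_0_INR; lia). field. lra. Qed.

Lemma node_inj N i j : (1 <= N)%nat -> node N i = node N j -> i = j.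
Proof.
  intros HN E. assert (0 < INR N) by (apply lt_0_INR; lia). unfold node in E.
  apply INR_eq. apply (Rmult_eq_reg_l (2 / INR N)); [|apply Rgt_not_eq, Rdiv_lt_0_compat; lra].
  unfold Rdiv in *. lra.
Qed.

Lemma lagrange_basis_node N j i : (1 <= N)%nat -> (j <= N)%nat -> (i <= N)%nat ->
  lagrange_basis N j (node N i) = if Nat.eqb i j then 1 else 0.
Proof.
  intros HN Hj Hi. unfold lagrange_basis. destruct (Nat.eqb_spec i j) as [->|Hij].
  - apply rprod_eq1. intros l Hl. unfold lagrange_factor. destruct (Nat.eqb_spec l j); auto.
    field. intros E. apply n, (node_inj N); auto. lra.
  - apply (rprod_eq0 _ _ i); [lia|]. unfold lagrange_factor.
    destruct (Nat.eqb_spec i j); [lia|]. unfold Rdiv; ring.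
Qed.

Lemma lagrange_interp_node N G i : (1 <= N)%nat -> (i <= N)%nat ->
  lagrange_interp N G (node N i) = G (node N i).
Proof.
  intros HN Hi. unfold lagrange_interp. rewrite (rsum_delta _ _ i); [| lia |].
  - rewrite lagrange_basis_node, Nat.eqb_refl; auto. ring.
  - intros j Hj E. rewrite lagrange_basis_node; [|auto|lia|auto].
    destruct (Nat.eqb_spec i j); [lia|ring].
Qed.
Lemma Re_interpN N g t : fst (interpN N g t) = lagrange_interp N (fun x => fst (g x)) t.
Proof.
  unfold interpN. rewrite Re_csum.
  apply rsum_ext; intros; unfold lagrange_basis, lagrange_factor; simpl; ring.
Qed.

Lemma Im_interpN N g t : snd (interpN N g t) = lagrange_interp N (fun x => snd (g x)) t.
Proof.
  unfold interpN. rewrite Im_csum.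
  apply rsum_ext; intros; unfold lagrange_basis, lagrange_factor; simpl; ring.
Qed.

Lemma interpN_synth N T g : 0 < T -> exists c, forall t, interpN N g t = synth N T c t.
Proof.
  intros HT. destruct (legT_span T N _ HT (lagrange_interp_poly N (fun x => fst (g x)))) as [cr Hr].
  destruct (legT_span T N _ HT (lagrange_interp_poly N (fun x => snd (g x)))) as [ci Hi].
  exists (fun l => (cr l, ci l)). intros t.
  apply injective_projections; rewrite ?Re_interpN, ?Im_interpN, ?Re_synth, ?Im_synth; auto.
Qed.

Definition clamp (a b z : R) : R := Rmax a (Rmin b z).

(* Continuity on [[a, b]] is encoded as continuity of [f] composed with the projection onto
   [[a, b]], which only depends on [f] on [[a, b]] and avoids filters restricted to the interval. *)
Definition cont_on (a b : R) (f : R -> R) : Prop :=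
  forall w, continuous (fun y => f (clamp a b y)) w.

Lemma clamp_in a b z : a <= b -> a <= clamp a b z <= b.
Proof. intros. unfold clamp, Rmax, Rmin. repeat destruct Rle_dec; lra. Qed.

Lemma clamp_id a b z : a <= z <= b -> clamp a b z = z.
Proof. intros. unfold clamp, Rmax, Rmin. repeat destruct Rle_dec; lra. Qed.

Lemma clamp_continuous a b w : a <= b -> continuous (clamp a b) w.
Proof.
  intros Hab. apply filterlim_locally. intros eps. exists eps. intros y Hy.
  apply Rle_lt_trans with (2 := Hy). unfold clamp, Rmax, Rmin.
  unfold ball; simpl; unfold AbsRing_ball, abs, minus, plus, opp; simpl.
  repeat destruct Rle_dec; unfold Rabs; repeat destruct Rcase_abs; lra.
Qed.

Lemma cont_on_of_continuous a b f : a <= b -> (forall w, a <= w <= b -> continuous f w) -> cont_on a b f.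
Proof.
  intros Hab H w. apply (continuous_comp (clamp a b) f); [apply clamp_continuous|apply H, clamp_in]; auto.
Qed.

Lemma cont_on_sub a b a' b' f : a <= a' -> a' <= b' -> b' <= b -> cont_on a b f -> cont_on a' b' f.
Proof.
  intros H1 H2 H3 Hf w.
  apply continuous_ext with (fun y => (fun z => f (clamp a b z)) (clamp a' b' y)).
  { intros; rewrite (clamp_id a b); auto. generalize (clamp_in a' b' x); lra. }
  apply (continuous_comp (clamp a' b') (fun z => f (clamp a b z))); [apply clamp_continuous; lra|apply Hf].
Qed.

Lemma cont_on_ext a b f g : a <= b -> (forall y, a <= y <= b -> f y = g y) -> cont_on a b f -> cont_on a b g.
Proof. intros Hab E Hf w. eapply continuous_ext; [|apply Hf]. intros; apply E, clamp_in; auto. Qed.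

Lemma cont_on_plus a b f g : cont_on a b f -> cont_on a b g -> cont_on a b (fun y => f y + g y).
Proof.
  intros Hf Hg w. apply (continuous_plus (fun y => f (clamp a b y)) (fun y => g (clamp a b y))); auto.
Qed.

Lemma cont_on_scal a b f k : cont_on a b f -> cont_on a b (fun y => k * f y).
Proof.
  intros Hf w. apply (continuous_scal (fun _ => k) (fun y => f (clamp a b y))); auto.
  apply continuous_const.
Qed.

Lemma cont_on_mult a b f g : cont_on a b f -> cont_on a b g -> cont_on a b (fun y => f y * g y).
Proof.
  intros Hf Hg w. apply (continuous_mult (fun y => f (clamp a b y)) (fun y => g (clamp a b y))); auto.
Qed.

Lemma cont_on_lin a b f g al be : cont_on a b f -> cont_on a b g ->
  cont_on a b (fun y => al * f y + be * g y).
Proof. intros; apply cont_on_plus; apply cont_on_scal; auto. Qed.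

Lemma cont_on_poly a b n q : a <= b -> is_poly n q -> cont_on a b q.
Proof. intros Hab Hq. apply cont_on_of_continuous; auto. intros; eapply is_poly_continuous; eauto. Qed.

Lemma cont_on_within a b f : a <= b -> (forall x, a <= x <= b -> cont_within_ab a b f x) -> cont_on a b f.
Proof.
  intros Hab H w.
  eapply (filterlim_comp _ _ _ (clamp a b) f _ (within (fun y => a <= y <= b) (locally (clamp a b w)))).
  - intros P HP. unfold within in HP. generalize (clamp_continuous a b w Hab _ HP).
    unfold filtermap. apply filter_imp.
    intros y Hy. apply Hy, clamp_in; auto.
  - apply H, clamp_in; auto.
Qed.

Lemma cont_on_affine a b F c s : 0 <= s -> a <= c - s -> c + s <= b ->
  cont_on a b F -> cont_on (-1) 1 (fun t => F (c + s * t)).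
Proof.
  intros Hs H1 H2 HF w.
  apply continuous_ext with (fun y => (fun z => F (clamp a b z)) (c + s * clamp (-1) 1 y)).
  { intros y. rewrite clamp_id; auto. generalize (clamp_in (-1) 1 y ltac:(lra)). nra. }
  apply (continuous_comp (fun y => c + s * clamp (-1) 1 y) (fun z => F (clamp a b z))); [|apply HF].
  apply (continuous_comp (clamp (-1) 1) (fun t => c + s * t)); [apply clamp_continuous; lra|].
  apply (ex_derive_continuous (K:=R_AbsRing) (V:=R_NormedModule)). auto_derive; auto.
Qed.

Lemma ex_RInt_cont_on a b F : a <= b -> cont_on a b F -> ex_RInt F a b.
Proof.
  intros Hab H. apply (ex_RInt_ext (fun t => F (clamp a b t))).
  - intros x Hx. rewrite Rmin_left, Rmax_right in Hx by lra. rewrite clamp_id; lra.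
  - apply (ex_RInt_continuous (V:=R_CompleteNormedModule)). intros; apply H.
Qed.

Lemma locally_open_interval a b x : a < x < b -> locally x (fun y => a < y < b).
Proof. intros H. apply (locally_interval _ x a b); simpl; try lra. auto. Qed.

Lemma Rolle_cont_on f x y : x < y -> cont_on x y f -> (forall w, x < w < y -> ex_derive f w) ->
  f x = f y -> exists xi, x < xi < y /\ Derive f xi = 0.
Proof.
  intros Hxy Hc Hd Heq. set (h := fun z => f (clamp x y z)).
  assert (Hloc : forall w, x < w < y -> locally w (fun z => f z = h z)).
  { intros w Hw. generalize (locally_open_interval _ _ _ Hw). apply filter_imp.
    intros z Hz. unfold h. rewrite clamp_id; lra. }
  assert (pr : forall w, x < w < y -> derivable_pt h w).
  { intros w Hw. apply ex_derive_Reals_0. eapply ex_derive_ext_loc; [apply Hloc|apply Hd]; auto. }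
  destruct (Rolle h x y pr) as [c [P Hc']]; auto.
  - intros w _. apply continuity_pt_filterlim. apply Hc.
  - unfold h; rewrite !clamp_id; lra.
  - exists c; split; auto. rewrite Derive_Reals in Hc'. rewrite <- Hc'.
    apply Derive_ext_loc, Hloc; auto.
Qed.

Lemma increasing_le (z : nat -> R) n : (forall i, (i < n)%nat -> z i < z (S i)) ->
  forall i j, (i <= j <= n)%nat -> z i <= z j.
Proof.
  intros H i j Hij. induction j as [|j IH]; [replace i with 0%nat by lia; lra|].
  destruct (Nat.eq_dec i (S j)) as [->|]; [lra|].
  specialize (IH ltac:(lia)). specialize (H j ltac:(lia)). lra.
Qed.

Lemma Rolle_between_zeros m (E : R -> R) (z : nat -> R) :
  (forall i, (i < m)%nat -> z i < z (S i)) -> (forall i, (i <= m)%nat -> E (z i) = 0) ->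
  cont_on (z 0%nat) (z m) E -> (forall w, z 0%nat < w < z m -> ex_derive E w) ->
  exists y : nat -> R, forall i, (i < m)%nat -> z i < y i < z (S i) /\ Derive E (y i) = 0.
Proof.
  intros Hz Hzero Hc Hd. apply (choice (fun i y => (i < m)%nat -> z i < y < z (S i) /\ Derive E y = 0)).
  intros i. destruct (Nat.lt_ge_cases i m) as [Hi|Hi]; [|exists 0; intros; lia].
  assert (z 0%nat <= z i /\ z (S i) <= z m) as [Hi0 HiS]
    by (split; apply (increasing_le z m); auto; lia).
  assert (Hc' : cont_on (z i) (z (S i)) E)
    by (apply (cont_on_sub (z 0%nat) (z m)); [| apply Rlt_le, Hz| |]; auto).
  assert (Hd' : forall w, z i < w < z (S i) -> ex_derive E w) by (intros; apply Hd; lra).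
  assert (He : E (z i) = E (z (S i))) by (rewrite !Hzero; auto; lia).
  destruct (Rolle_cont_on E (z i) (z (S i)) (Hz i Hi) Hc' Hd' He) as [y Hy].
  exists y; auto.
Qed.

Lemma Rolle_iterated n : forall (E : R -> R) (z : nat -> R),
  (forall i, (i < S n)%nat -> z i < z (S i)) ->
  (forall i, (i <= S n)%nat -> E (z i) = 0) ->
  cont_on (z 0%nat) (z (S n)) E ->
  (forall k w, (k <= S n)%nat -> z 0%nat < w < z (S n) -> ex_derive_n E k w) ->
  exists xi, z 0%nat < xi < z (S n) /\ Derive_n E (S n) xi = 0.
Proof.
  induction n as [|n IH]; intros E z Hz Hzero Hc Hd.
  - apply Rolle_cont_on; [apply Hz; lia|exact Hc| |rewrite !Hzero; auto].
    intros w Hw. generalize (Hd 1%nat w ltac:(lia) Hw). apply ex_derive_ext. auto.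
  - destruct (Rolle_between_zeros (S (S n)) E z) as [y Hy]; auto.
    { intros w Hw. generalize (Hd 1%nat w ltac:(lia) Hw). apply ex_derive_ext; auto. }
    assert (Hyz : forall i, (i < S (S n))%nat -> z i < y i < z (S i)) by (intros; apply Hy; auto).
    assert (Hyinc : forall i, (i < S n)%nat -> y i < y (S i)).
    { intros i Hi. generalize (Hyz i ltac:(lia)) (Hyz (S i) ltac:(lia)). lra. }
    assert (Hy0 : z 0%nat < y 0%nat) by (apply Hyz; lia).
    assert (HyS : y (S n) < z (S (S n))) by (apply Hyz; lia).
    assert (Hy0S : y 0%nat <= y (S n)) by (apply (increasing_le y (S n)); auto; lia).
    destruct (IH (Derive E) y) as [xi [Hxi HD]]; auto.
    + intros i Hi. apply Hy; lia.
    + apply cont_on_of_continuous; auto. intros w Hw.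
      apply (ex_derive_continuous (K:=R_AbsRing) (V:=R_NormedModule)).
      generalize (Hd 2%nat w ltac:(lia) ltac:(lra)). apply ex_derive_ext.
      intros; apply Derive_ext; auto.
    + intros k w Hk Hw. apply ex_derive_n_S_inv, Hd; [lia|lra].
    + exists xi. split; [lra|]. rewrite Derive_n_S. auto.
Qed.

Lemma locate_in_grid (z : nat -> R) n t : (forall i, (i < n)%nat -> z i < z (S i)) ->
  z 0%nat <= t <= z n ->
  (exists i, (i <= n)%nat /\ t = z i) \/ (exists m, (m < n)%nat /\ z m < t < z (S m)).
Proof.
  induction n as [|n IH]; intros Hz Ht; [left; exists 0%nat; split; [lia|lra]|].
  destruct (Rle_dec t (z n)).
  - destruct IH as [[i [Hi E]]|[m [Hm E]]]; [intros; apply Hz; lia|lra| |].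
    + left; exists i; split; auto.
    + right; exists m; split; auto.
  - destruct (Req_dec t (z (S n))); [left; exists (S n); auto|].
    right; exists n; split; auto; lra.
Qed.

Lemma nodes_with_point N m t : (1 <= N)%nat -> (m < N)%nat -> node N m < t < node N (S m) ->
  exists z : nat -> R,
    (forall i, (i < S N)%nat -> z i < z (S i)) /\ z 0%nat = -1 /\ z (S N) = 1 /\
    (forall i, (i <= S N)%nat -> z i = t \/ exists j, (j <= N)%nat /\ z i = node N j).
Proof.
  intros HN Hm Ht. assert (Hinc : forall i, node N i < node N (S i)) by (intros; apply node_lt; auto).
  exists (fun i => if Nat.leb i m then node N i else if Nat.eqb i (S m) then t else node N (i - 1)).
  split; [|split; [|split]].
  - intros i Hi. destruct (Nat.leb_spec i m); destruct (Nat.leb_spec (S i) m); try lia.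
    + apply Hinc.
    + replace i with m by lia. rewrite Nat.eqb_refl. lra.
    + destruct (Nat.eqb_spec i (S m)); destruct (Nat.eqb_spec (S i) (S m)); try lia.
      * subst i. replace (S (S m) - 1)%nat with (S m) by lia. lra.
      * replace (S i - 1)%nat with (S (i - 1)) by lia. apply Hinc.
  - apply node_0.
  - destruct (Nat.leb_spec (S N) m); [lia|]. destruct (Nat.eqb_spec (S N) (S m)); [lia|].
    replace (S N - 1)%nat with N by lia. apply node_N; auto.
  - intros i Hi. destruct (Nat.leb_spec i m); [right; exists i; split; auto; lia|].
    destruct (Nat.eqb_spec i (S m)); [left; auto|right; exists (i - 1)%nat; split; auto; lia].
Qed.

Section InterpolationError.
Variables (N : nat) (G : R -> R).
Hypotheses (HN : (1 <= N)%nat) (HG : cont_on (-1) 1 G)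
  (HGd : forall k x, (k <= S N)%nat -> -1 < x < 1 -> ex_derive_n G k x).

Lemma node_poly_node i : (i <= N)%nat -> node_poly N (node N i) = 0.
Proof. intros Hi. apply (rprod_eq0 _ _ i); [lia|ring]. Qed.

(* Cauchy's remainder formula, proved by applying [Rolle_iterated] to
   [G - L_N G - lam * node_poly N], which vanishes at the nodes and at [t]. *)
Lemma lagrange_interp_remainder t : -1 <= t <= 1 -> exists xi, -1 < xi < 1 /\
  G t - lagrange_interp N G t = Derive_n G (S N) xi / INR (fact (S N)) * node_poly N t.
Proof.
  intros Ht. assert (Hf := INR_fact_lt_0 (S N)).
  assert (Hinc : forall i, (i < N)%nat -> node N i < node N (S i)) by (intros; apply node_lt; auto).
  destruct (locate_in_grid (node N) N t Hinc) as [[i [Hi ->]]|[m [Hm Htm]]];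
    [rewrite node_0, node_N; auto| |].
  { exists 0. rewrite lagrange_interp_node, node_poly_node; auto. split; [lra|ring]. }
  destruct (nodes_with_point N m t HN Hm Htm) as [z [Hz [Hz0 [HzN Hzn]]]].
  assert (Hom : node_poly N t <> 0).
  { apply rprod_neq0. intros i Hi. destruct (Nat.le_gt_cases i m).
    - assert (node N i <= node N m) by (apply (increasing_le _ N); auto; lia). lra.
    - assert (node N (S m) <= node N i) by (apply (increasing_le _ N); auto; lia). lra. }
  set (lam := (G t - lagrange_interp N G t) / node_poly N t).
  set (q := fun x => 1 * lagrange_interp N G x + lam * node_poly N x).
  assert (Lq : is_poly_lc (S N) (1 * 0 + lam * 1) q).
  { apply is_poly_lc_lin; [apply is_poly_raise, lagrange_interp_poly|apply node_poly_lc]. }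
  destruct (is_poly_smooth _ _ (is_poly_lc_poly _ _ _ Lq)) as [Sq _].
  assert (HGloc : forall x, -1 < x < 1 ->
    locally x (fun y => forall k, (k <= S N)%nat -> ex_derive_n G k y)).
  { intros x Hx. generalize (locally_open_interval _ _ _ Hx). apply filter_imp. intros; apply HGd; auto. }
  assert (HEd : forall x, -1 < x < 1 -> forall k, (k <= S N)%nat -> ex_derive_n (fun x => G x - q x) k x).
  { intros x Hx k Hk. apply ex_derive_n_minus; [|apply filter_forall; intros; apply Sq].
    generalize (HGloc x Hx). apply filter_imp. intros y Hy k' Hk'. apply Hy; lia. }
  destruct (Rolle_iterated N (fun x => G x - q x) z) as [xi [Hxi HD]]; auto.
  - intros i Hi. destruct (Hzn i Hi) as [->|[j [Hj ->]]]; unfold q, lam.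
    + field; auto.
    + rewrite lagrange_interp_node, node_poly_node; auto. ring.
  - rewrite Hz0, HzN. apply cont_on_ext with (fun x => 1 * G x + (-1) * q x); [lra|intros; ring|].
    apply cont_on_lin; auto. eapply cont_on_poly; [lra|]. eapply is_poly_lc_poly; eauto.
  - intros k w Hk Hw. rewrite Hz0, HzN in Hw. apply HEd; auto.
  - rewrite Hz0, HzN in Hxi. exists xi. split; auto.
    rewrite Derive_n_minus, (is_poly_lc_Derive_n _ _ _ Lq) in HD;
      [|apply HGloc; auto|apply filter_forall; intros; apply Sq].
    replace (G t - lagrange_interp N G t) with (lam * node_poly N t) by (unfold lam; field; auto).
    f_equal. apply (Rmult_eq_reg_r (INR (fact (S N)))); [|lra]. field_simplify; lra.
Qed.

Lemma lagrange_interp_error M t : (forall x, -1 < x < 1 -> Rabs (Derive_n G (S N) x) <= M) ->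
  -1 <= t <= 1 -> Rabs (G t - lagrange_interp N G t) <= M / INR (fact (S N)) * Rabs (node_poly N t).
Proof.
  intros HM Ht. destruct (lagrange_interp_remainder t Ht) as [xi [Hxi ->]].
  assert (Hf := INR_fact_lt_0 (S N)).
  rewrite Rabs_mult, Rabs_div, (Rabs_pos_eq (INR _)); [|lra|lra].
  apply Rmult_le_compat_r; [apply Rabs_pos|]. unfold Rdiv.
  apply Rmult_le_compat_r; [left; apply Rinv_0_lt_compat; auto|apply HM; auto].
Qed.
End InterpolationError.

Lemma rprod_abs_sub_INR_le_fact n x : 0 <= x <= INR n ->
  rprod (fun i => Rabs (x - INR i)) (S n) <= INR (fact n).
Proof.
  revert x; induction n as [|n IH]; intros x Hx.
  - simpl in *. replace x with 0 by lra. rewrite Rminus_0_r, Rabs_R0. lra.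
  - assert (Hn := pos_INR n). rewrite S_INR in Hx.
    change (fact (S n)) with (S n * fact n)%nat. rewrite mult_INR, S_INR.
    assert (Hpos : forall y, 0 <= rprod (fun i => Rabs (y - INR i)) (S n))
      by (intros; apply rprod_ge0; intros; apply Rabs_pos).
    destruct (Rle_dec x (INR n)).
    + change (rprod ?F (S (S n))) with (rprod F (S n) * F (S n)).
      rewrite Rmult_comm. apply Rmult_le_compat; auto; [apply Rabs_pos| |apply IH; lra].
      rewrite S_INR. unfold Rabs; destruct Rcase_abs; lra.
    + destruct (Rle_dec 1 x).
      * rewrite rprod_shift, (rprod_ext _ (fun i => Rabs ((x - 1) - INR i))).
        -- apply Rmult_le_compat; auto; [apply Rabs_pos| |apply IH; lra].
           simpl. unfold Rabs; destruct Rcase_abs; lra.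
        -- intros i _. rewrite S_INR. f_equal. ring.
      * assert (n = 0%nat) as ->.
        { destruct n; auto. rewrite S_INR in n0. generalize (pos_INR n). lra. }
        simpl. rewrite Rminus_0_r. unfold Rabs; repeat destruct Rcase_abs; nra.
Qed.

(* Substituting [t = -1 + 2 x / N] turns the nodes into the integers [0 .. N]. *)
Lemma node_poly_bound N t : (1 <= N)%nat -> -1 <= t <= 1 ->
  Rabs (node_poly N t) <= INR (fact N) * (2 / INR N) ^ (S N).
Proof.
  intros HN Ht. assert (HNp : 0 < INR N) by (apply lt_0_INR; lia).
  assert (H2N : 0 <= (2 / INR N) ^ S N) by (apply pow_le; apply Rlt_le, Rdiv_lt_0_compat; lra).
  set (x := (t + 1) * INR N / 2).
  unfold node_poly. rewrite (rprod_ext _ (fun i => (2 / INR N) * (x - INR i))).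
  - rewrite rprod_scal, Rabs_mult, Rabs_rprod, Rabs_pos_eq, (Rmult_comm (INR _)); auto.
    apply Rmult_le_compat_l; auto. apply rprod_abs_sub_INR_le_fact. unfold x. split.
    + apply Rmult_le_pos; [apply Rmult_le_pos|]; lra.
    + apply Rmult_le_reg_r with 2; [lra|]. unfold Rdiv. rewrite Rmult_assoc, Rinv_l; nra.
  - intros i _. unfold x, node. field. lra.
Qed.

Lemma lagrange_interp_error_nodes N G M t : (1 <= N)%nat -> cont_on (-1) 1 G ->
  (forall k x, (k <= S N)%nat -> -1 < x < 1 -> ex_derive_n G k x) ->
  (forall x, -1 < x < 1 -> Rabs (Derive_n G (S N) x) <= M) -> -1 <= t <= 1 ->
  Rabs (G t - lagrange_interp N G t) <= M * (2 / INR N) ^ (S N) / INR (S N).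
Proof.
  intros HN HG HGd HM Ht.
  assert (HM0 : 0 <= M) by (apply Rle_trans with (2 := HM 0 ltac:(lra)), Rabs_pos).
  assert (Hf := INR_fact_lt_0 N). assert (0 < INR (S N)) by (apply lt_0_INR; lia).
  eapply Rle_trans; [apply lagrange_interp_error; eauto|].
  eapply Rle_trans; [apply Rmult_le_compat_l; [|apply node_poly_bound; auto]|].
  - apply Rdiv_le_0_compat; [auto|apply INR_fact_lt_0].
  - change (fact (S N)) with (S N * fact N)%nat. rewrite mult_INR. right. field. lra.
Qed.

Record inner_space (X : Type) := InnerSpace {
  sp_mem : X -> Prop;
  sp_add : X -> X -> X;
  sp_scal : C -> X -> X;
  sp_zero : X;
  sp_ip : X -> X -> C;
  sp_mem_add : forall x y, sp_mem x -> sp_mem y -> sp_mem (sp_add x y);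
  sp_mem_scal : forall a x, sp_mem x -> sp_mem (sp_scal a x);
  sp_mem_zero : sp_mem sp_zero;
  sp_ip_add_l : forall x y z, sp_mem x -> sp_mem y -> sp_mem z ->
    sp_ip (sp_add x y) z = Cplus (sp_ip x z) (sp_ip y z);
  sp_ip_scal_l : forall a x z, sp_mem x -> sp_mem z -> sp_ip (sp_scal a x) z = Cmult a (sp_ip x z);
  sp_ip_zero_l : forall z, sp_mem z -> sp_ip sp_zero z = 0%C;
  sp_ip_conj : forall x y, sp_mem x -> sp_mem y -> sp_ip x y = Cconj (sp_ip y x);
  sp_ip_self_ge0 : forall x, sp_mem x -> 0 <= fst (sp_ip x x)
}.
Arguments sp_mem {X}. Arguments sp_add {X}. Arguments sp_scal {X}. Arguments sp_zero {X}.
Arguments sp_ip {X}. Arguments sp_mem_add {X}. Arguments sp_mem_scal {X}.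
Arguments sp_mem_zero {X}. Arguments sp_ip_add_l {X}. Arguments sp_ip_scal_l {X}.
Arguments sp_ip_zero_l {X}. Arguments sp_ip_conj {X}. Arguments sp_ip_self_ge0 {X}.

Section InnerSpaceTheory.
Context {X : Type} (V : inner_space X).
Local Notation mem := (sp_mem V).
Local Notation add := (sp_add V).
Local Notation scal := (sp_scal V).
Local Notation ip := (sp_ip V).

Fixpoint sp_sum (F : nat -> X) (n : nat) : X :=
  match n with O => sp_zero V | S m => add (sp_sum F m) (F m) end.
Definition sp_sqnorm (x : X) : R := fst (ip x x).
Definition sp_sub (x y : X) : X := add x (scal (RtoC (-1)) y).

Definition sp_orthonormal (e : nat -> X) (m : nat) : Prop :=
  (forall i, (i < m)%nat -> mem (e i)) /\
  (forall i j, (i < m)%nat -> (j < m)%nat -> ip (e i) (e j) = RtoC (if Nat.eqb i j then 1 else 0)).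

Lemma sp_mem_sum F n : (forall j, (j < n)%nat -> mem (F j)) -> mem (sp_sum F n).
Proof. induction n; intros H; simpl; [apply sp_mem_zero|apply sp_mem_add; auto]. Qed.

Lemma sp_mem_sub x y : mem x -> mem y -> mem (sp_sub x y).
Proof. intros; apply sp_mem_add, sp_mem_scal; auto. Qed.

Lemma sp_ip_sum_l F n z : (forall j, (j < n)%nat -> mem (F j)) -> mem z ->
  ip (sp_sum F n) z = csum (fun j => ip (F j) z) n.
Proof.
  induction n as [|n IH]; intros H Hz; simpl; [apply sp_ip_zero_l; auto|].
  rewrite sp_ip_add_l, IH; auto. apply sp_mem_sum; auto.
Qed.

Lemma sp_ip_add_r x y z : mem x -> mem y -> mem z -> ip z (add x y) = Cplus (ip z x) (ip z y).
Proof.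
  intros. rewrite sp_ip_conj, sp_ip_add_l, (sp_ip_conj V x z), (sp_ip_conj V y z);
    auto using sp_mem_add.
  apply injective_projections; simpl; ring.
Qed.

Lemma sp_ip_scal_r a x z : mem x -> mem z -> ip z (scal a x) = Cmult (Cconj a) (ip z x).
Proof.
  intros. rewrite sp_ip_conj, sp_ip_scal_l, (sp_ip_conj V x z); auto using sp_mem_scal.
  apply injective_projections; simpl; ring.
Qed.

Lemma sp_ip_sum_r F n z : (forall j, (j < n)%nat -> mem (F j)) -> mem z ->
  ip z (sp_sum F n) = csum (fun j => ip z (F j)) n.
Proof.
  intros H Hz. rewrite sp_ip_conj, sp_ip_sum_l, csum_conj; auto using sp_mem_sum.
  apply csum_ext. intros. rewrite sp_ip_conj, (sp_ip_conj V z); auto.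
  apply injective_projections; simpl; ring.
Qed.

Lemma sp_ip_sum_orthonormal e m b i : sp_orthonormal e m -> (i < m)%nat ->
  ip (sp_sum (fun j => scal (b j) (e j)) m) (e i) = b i.
Proof.
  intros [Hm Ho] Hi. rewrite sp_ip_sum_l; auto using sp_mem_scal.
  rewrite (csum_delta _ _ i), sp_ip_scal_l, Ho, Nat.eqb_refl; auto; [ring|].
  intros j Hj Hji. rewrite sp_ip_scal_l, Ho; auto.
  destruct (Nat.eqb_spec j i); [lia|ring].
Qed.

Lemma sp_sqnorm_sum_orthonormal e m b : sp_orthonormal e m ->
  sp_sqnorm (sp_sum (fun j => scal (b j) (e j)) m) = rsum (fun j => Cmod (b j) ^ 2) m.
Proof.
  intros Ho. pose proof Ho as [Hm _].
  assert (Hs : forall j, (j < m)%nat -> mem (scal (b j) (e j))) by auto using sp_mem_scal.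
  unfold sp_sqnorm. rewrite sp_ip_sum_r, Re_csum; auto using sp_mem_sum.
  apply rsum_ext. intros j Hj. rewrite sp_ip_scal_r, sp_ip_sum_orthonormal, Cmod_sqr;
    auto using sp_mem_sum.
  simpl; ring.
Qed.

Lemma sp_sqnorm_ge0 x : mem x -> 0 <= sp_sqnorm x.
Proof. apply sp_ip_self_ge0. Qed.

Lemma sp_sqnorm_add x y : mem x -> mem y ->
  sp_sqnorm (add x y) = sp_sqnorm x + 2 * fst (ip x y) + sp_sqnorm y.
Proof.
  intros. unfold sp_sqnorm. rewrite sp_ip_add_l, !sp_ip_add_r, (sp_ip_conj V y x);
    auto using sp_mem_add.
  simpl. ring.
Qed.

Lemma sp_sqnorm_scal a x : mem x -> sp_sqnorm (scal (RtoC a) x) = a * a * sp_sqnorm x.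
Proof.
  intros. unfold sp_sqnorm. rewrite sp_ip_scal_l, sp_ip_scal_r; auto using sp_mem_scal.
  simpl. ring.
Qed.

Lemma sp_sqnorm_add_scal x y l : mem x -> mem y ->
  sp_sqnorm (add x (scal (RtoC l) y)) = sp_sqnorm x + 2 * l * fst (ip x y) + l * l * sp_sqnorm y.
Proof.
  intros. rewrite sp_sqnorm_add, sp_sqnorm_scal, sp_ip_scal_r; auto using sp_mem_scal.
  simpl. ring.
Qed.

Lemma sp_cauchy_schwarz x y : mem x -> mem y -> fst (ip x y) * fst (ip x y) <= sp_sqnorm x * sp_sqnorm y.
Proof.
  intros Hx Hy.
  assert (Q : forall l, 0 <= sp_sqnorm x + 2 * l * fst (ip x y) + l * l * sp_sqnorm y).
  { intros l. rewrite <- sp_sqnorm_add_scal; auto. apply sp_sqnorm_ge0, sp_mem_add, sp_mem_scal; auto. }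
  set (A := sp_sqnorm x) in *. set (B := fst (ip x y)) in *. set (D := sp_sqnorm y) in *.
  assert (HA : 0 <= A) by (apply sp_sqnorm_ge0; auto).
  assert (HD : 0 <= D) by (apply sp_sqnorm_ge0; auto).
  destruct (Req_dec D 0) as [E|E].
  - destruct (Req_dec B 0) as [EB|EB]; [rewrite EB; nra|].
    specialize (Q (- (A + 1) / (2 * B))). rewrite E in Q.
    replace (A + 2 * (- (A + 1) / (2 * B)) * B + - (A + 1) / (2 * B) * (- (A + 1) / (2 * B)) * 0)
      with (-1) in Q by (field; auto). lra.
  - specialize (Q (- B / D)).
    replace (A + 2 * (- B / D) * B + - B / D * (- B / D) * D) with (A - B * B / D) in Q
      by (field; auto).
    apply Rmult_le_reg_r with (/ D); [apply Rinv_0_lt_compat; lra|].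
    replace (A * D * / D) with A by (field; auto). unfold Rdiv in Q. lra.
Qed.

Lemma sp_norm_triangle x y : mem x -> mem y ->
  sqrt (sp_sqnorm (add x y)) <= sqrt (sp_sqnorm x) + sqrt (sp_sqnorm y).
Proof.
  intros Hx Hy. assert (HA := sp_sqnorm_ge0 _ Hx). assert (HC := sp_sqnorm_ge0 _ Hy).
  assert (HS := sp_sqnorm_ge0 _ (sp_mem_add V _ _ Hx Hy)).
  assert (Hxy : fst (ip x y) <= sqrt (sp_sqnorm x) * sqrt (sp_sqnorm y)).
  { rewrite <- sqrt_mult; auto. apply Rsqr_incr_0_var; [|apply sqrt_pos]. unfold Rsqr.
    rewrite sqrt_sqrt; [apply sp_cauchy_schwarz; auto|nra]. }
  apply Rsqr_incr_0_var; [|apply Rplus_le_le_0_compat; apply sqrt_pos].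
  unfold Rsqr. rewrite sqrt_sqrt, sp_sqnorm_add; auto.
  replace ((sqrt (sp_sqnorm x) + sqrt (sp_sqnorm y)) * (sqrt (sp_sqnorm x) + sqrt (sp_sqnorm y))) with
    (sqrt (sp_sqnorm x) * sqrt (sp_sqnorm x) + 2 * (sqrt (sp_sqnorm x) * sqrt (sp_sqnorm y))
     + sqrt (sp_sqnorm y) * sqrt (sp_sqnorm y)) by ring.
  rewrite !sqrt_sqrt; auto. lra.
Qed.

Lemma sp_bessel_masked x e m (d : nat -> bool) : mem x -> sp_orthonormal e m ->
  sp_sqnorm (sp_sub x (sp_sum (fun j => scal (if d j then ip x (e j) else 0%C) (e j)) m)) =
  sp_sqnorm x - rsum (fun j => if d j then Cmod (ip x (e j)) ^ 2 else 0) m.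
Proof.
  intros Hx Ho. set (b := fun j => if d j then ip x (e j) else 0%C). pose proof Ho as [Hm _].
  assert (Hs : forall j, (j < m)%nat -> mem (scal (b j) (e j))) by auto using sp_mem_scal.
  assert (Hsum : mem (sp_sum (fun j => scal (b j) (e j)) m)) by auto using sp_mem_sum.
  unfold sp_sub. rewrite sp_sqnorm_add_scal, sp_sqnorm_sum_orthonormal, sp_ip_sum_r, Re_csum;
    auto.
  assert (E1 : rsum (fun i => fst (ip x (scal (b i) (e i)))) m =
               rsum (fun j => if d j then Cmod (ip x (e j)) ^ 2 else 0) m).
  { apply rsum_ext. intros i Hi. rewrite sp_ip_scal_r; auto. unfold b.
    destruct (d i); [rewrite Cmod_sqr|]; simpl; ring. }
  assert (E2 : rsum (fun j => Cmod (b j) ^ 2) m =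
               rsum (fun j => if d j then Cmod (ip x (e j)) ^ 2 else 0) m).
  { apply rsum_ext. intros i Hi. unfold b. destruct (d i); auto. rewrite Cmod_0. ring. }
  unfold b in E1, E2. rewrite E1, E2. ring.
Qed.

Lemma sp_bessel_masked_le x e m (d : nat -> bool) : mem x -> sp_orthonormal e m ->
  sp_sqnorm (sp_sub x (sp_sum (fun j => scal (if d j then ip x (e j) else 0%C) (e j)) m))
    <= sp_sqnorm x.
Proof.
  intros Hx Ho. rewrite sp_bessel_masked; auto.
  assert (0 <= rsum (fun j => if d j then Cmod (ip x (e j)) ^ 2 else 0) m); [|lra].
  apply rsum_ge0. intros i _. destruct (d i); [apply pow2_ge_0|lra].
Qed.

Lemma sp_bessel x e m : mem x -> sp_orthonormal e m ->
  rsum (fun j => Cmod (ip x (e j)) ^ 2) m <= sp_sqnorm x.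
Proof.
  intros Hx Ho. pose proof Ho as [Hm _].
  generalize (sp_bessel_masked x e m (fun _ => true) Hx Ho). intros E.
  assert (0 <= sp_sqnorm (sp_sub x (sp_sum (fun j => scal (ip x (e j)) (e j)) m)));
    [apply sp_sqnorm_ge0, sp_mem_sub, sp_mem_sum; auto using sp_mem_scal|lra].
Qed.
End InnerSpaceTheory.

Lemma vdot_add_r N (x y z : nat -> C) :
  vdot N z (fun l => Cplus (x l) (y l)) = Cplus (vdot N z x) (vdot N z y).
Proof. unfold vdot. rewrite <- csum_plus. apply csum_ext; intros; ring. Qed.

Lemma vdot_scal_r N a (x z : nat -> C) : vdot N z (fun l => Cmult a (x l)) = Cmult a (vdot N z x).
Proof. unfold vdot. rewrite <- csum_scal. apply csum_ext; intros; ring. Qed.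

Lemma vdot_zero_r N (z : nat -> C) : vdot N z (fun _ => 0%C) = 0%C.
Proof.
  unfold vdot. rewrite (csum_ext _ (fun _ => 0%C)), csum_zero; auto. intros; ring.
Qed.

Lemma vdot_conj N (x y : nat -> C) : vdot N y x = Cconj (vdot N x y).
Proof.
  unfold vdot. rewrite csum_conj. apply csum_ext; intros.
  apply injective_projections; simpl; ring.
Qed.

Lemma vdot_self_ge0 N (x : nat -> C) : 0 <= fst (vdot N x x).
Proof. unfold vdot. rewrite Re_csum. apply rsum_ge0. intros; simpl. nra. Qed.

Definition vec_space (N : nat) : inner_space (nat -> C) :=
  InnerSpace (nat -> C) (fun _ => True) (fun x y l => Cplus (x l) (y l)) (fun a x l => Cmult a (x l))
    (fun _ => 0%C) (fun x y => vdot N y x) (fun _ _ _ _ => I) (fun _ _ _ => I) I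
    (fun x y z _ _ _ => vdot_add_r N x y z) (fun a x z _ _ => vdot_scal_r N a x z)
    (fun z _ => vdot_zero_r N z) (fun x y _ _ => vdot_conj N x y) (fun x _ => vdot_self_ge0 N x).

Lemma vnorm_sqnorm N c : vnorm N c = sqrt (sp_sqnorm (vec_space N) c).
Proof.
  unfold vnorm, sp_sqnorm, vec_space. cbn [sp_ip]. unfold vdot. rewrite Re_csum. f_equal.
  apply rsum_ext; intros. rewrite Cmod_sqr. simpl; ring.
Qed.

Definition cont_Lambda (h : R -> C) : Prop :=
  cont_on (-1) 1 (fun t => fst (h t)) /\ cont_on (-1) 1 (fun t => snd (h t)).

Lemma cont_Lambda_ext h h' : (forall t, -1 <= t <= 1 -> h t = h' t) -> cont_Lambda h -> cont_Lambda h'.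
Proof.
  intros E [H1 H2]. split.
  - apply cont_on_ext with (fun t => fst (h t)); auto; [lra|]. intros; rewrite E; auto.
  - apply cont_on_ext with (fun t => snd (h t)); auto; [lra|]. intros; rewrite E; auto.
Qed.

Lemma cont_Lambda_plus x y : cont_Lambda x -> cont_Lambda y -> cont_Lambda (fun t => Cplus (x t) (y t)).
Proof. intros [A B] [C D]. split; apply cont_on_plus; auto. Qed.

Lemma cont_Lambda_scal a x : cont_Lambda x -> cont_Lambda (fun t => Cmult a (x t)).
Proof.
  intros [A B]. split.
  - apply cont_on_ext with (fun t => fst a * fst (x t) + (- snd a) * snd (x t)); [lra|intros; simpl; ring|].
    apply cont_on_lin; auto.
  - apply cont_on_ext with (fun t => fst a * snd (x t) + snd a * fst (x t)); [lra|intros; simpl; ring|].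
    apply cont_on_lin; auto.
Qed.

Lemma cont_Lambda_minus x y : cont_Lambda x -> cont_Lambda y -> cont_Lambda (fun t => Cminus (x t) (y t)).
Proof.
  intros Hx Hy. apply cont_Lambda_ext with (fun t => Cplus (x t) (Cmult (RtoC (-1)) (y t))).
  { intros; ring. }
  apply cont_Lambda_plus, cont_Lambda_scal; auto.
Qed.

Lemma cont_Lambda_zero : cont_Lambda (fun _ => 0%C).
Proof. split; apply cont_on_of_continuous; try lra; intros; apply continuous_const. Qed.

Lemma cont_Lambda_mul_conj x z : cont_Lambda x -> cont_Lambda z ->
  cont_Lambda (fun t => Cmult (x t) (Cconj (z t))).
Proof.
  intros [A B] [C D]. split.
  - apply cont_on_ext with (fun t => fst (x t) * fst (z t) + snd (x t) * snd (z t));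
      [lra|intros; simpl; ring|apply cont_on_plus; apply cont_on_mult; auto].
  - apply cont_on_ext with (fun t => 1 * (snd (x t) * fst (z t)) + (-1) * (fst (x t) * snd (z t)));
      [lra|intros; simpl; ring|apply cont_on_lin; apply cont_on_mult; auto].
Qed.

Lemma cont_on_Cmod_sqr h : cont_Lambda h -> cont_on (-1) 1 (fun t => Cmod (h t) ^ 2).
Proof.
  intros Hh. apply cont_on_ext with (fun t => fst (Cmult (h t) (Cconj (h t))));
    [lra|intros; rewrite Cmod_sqr; simpl; ring|exact (proj1 (cont_Lambda_mul_conj h h Hh Hh))].
Qed.

Lemma RInt_lin_Lambda F G al be : cont_on (-1) 1 F -> cont_on (-1) 1 G ->
  RInt (fun t => al * F t + be * G t) (-1) 1 = al * RInt F (-1) 1 + be * RInt G (-1) 1.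
Proof.
  intros HF HG.
  assert (E1 := ex_RInt_cont_on (-1) 1 _ ltac:(lra) HF).
  assert (E2 := ex_RInt_cont_on (-1) 1 _ ltac:(lra) HG).
  rewrite (RInt_plus (fun t => al * F t) (fun t => be * G t)), (RInt_scal F), (RInt_scal G); auto.
  - apply (ex_RInt_scal F); auto.
  - apply (ex_RInt_scal G); auto.
Qed.

Lemma cint_Lambda_ext h h' : (forall t, -1 <= t <= 1 -> h t = h' t) -> cint_Lambda h = cint_Lambda h'.
Proof.
  intros H. unfold cint_Lambda.
  f_equal; apply RInt_ext; intros x Hx; rewrite Rmin_left, Rmax_right in Hx by lra;
    rewrite H; auto; lra.
Qed.

Lemma cint_Lambda_plus h1 h2 : cont_Lambda h1 -> cont_Lambda h2 ->
  cint_Lambda (fun t => Cplus (h1 t) (h2 t)) = Cplus (cint_Lambda h1) (cint_Lambda h2).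
Proof.
  intros [A1 B1] [A2 B2]. unfold cint_Lambda, Re, Im. apply injective_projections; simpl.
  - transitivity (RInt (fun t => 1 * fst (h1 t) + 1 * fst (h2 t)) (-1) 1);
      [apply RInt_ext; intros; simpl; ring|rewrite RInt_lin_Lambda; auto; ring].
  - transitivity (RInt (fun t => 1 * snd (h1 t) + 1 * snd (h2 t)) (-1) 1);
      [apply RInt_ext; intros; simpl; ring|rewrite RInt_lin_Lambda; auto; ring].
Qed.

Lemma cint_Lambda_scal a h : cont_Lambda h ->
  cint_Lambda (fun t => Cmult a (h t)) = Cmult a (cint_Lambda h).
Proof.
  intros [A B]. unfold cint_Lambda, Re, Im. apply injective_projections; simpl.
  - transitivity (RInt (fun t => fst a * fst (h t) + (- snd a) * snd (h t)) (-1) 1);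
      [apply RInt_ext; intros; simpl; ring|rewrite RInt_lin_Lambda; auto; ring].
  - transitivity (RInt (fun t => fst a * snd (h t) + snd a * fst (h t)) (-1) 1);
      [apply RInt_ext; intros; simpl; ring|rewrite RInt_lin_Lambda; auto; ring].
Qed.

Lemma cint_Lambda_conj h : cont_Lambda h -> cint_Lambda (fun t => Cconj (h t)) = Cconj (cint_Lambda h).
Proof.
  intros [A B]. unfold cint_Lambda, Re, Im. apply injective_projections; simpl; [reflexivity|].
  transitivity (RInt (fun t => (-1) * snd (h t) + 0 * snd (h t)) (-1) 1);
    [apply RInt_ext; intros; simpl; ring|rewrite RInt_lin_Lambda; auto; ring].
Qed.

Lemma cint_Lambda_zero : cint_Lambda (fun _ => 0%C) = 0%C.
Proof.
  unfold cint_Lambda, Re, Im. simpl. rewrite RInt_const. unfold scal; simpl; unfold mult; simpl.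
  apply injective_projections; simpl; ring.
Qed.

Lemma L2dot_ext_l h h' z : (forall t, -1 <= t <= 1 -> h t = h' t) -> L2dot h z = L2dot h' z.
Proof. intros H. apply cint_Lambda_ext. intros t Ht. rewrite H; auto. Qed.

Lemma L2dot_add_l x y z : cont_Lambda x -> cont_Lambda y -> cont_Lambda z ->
  L2dot (fun t => Cplus (x t) (y t)) z = Cplus (L2dot x z) (L2dot y z).
Proof.
  intros. unfold L2dot. rewrite <- cint_Lambda_plus; auto using cont_Lambda_mul_conj.
  apply cint_Lambda_ext. intros; ring.
Qed.

Lemma L2dot_scal_l a x z : cont_Lambda x -> cont_Lambda z ->
  L2dot (fun t => Cmult a (x t)) z = Cmult a (L2dot x z).
Proof.
  intros. unfold L2dot. rewrite <- cint_Lambda_scal; auto using cont_Lambda_mul_conj.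
  apply cint_Lambda_ext. intros; ring.
Qed.

Lemma L2dot_zero_l z : L2dot (fun _ => 0%C) z = 0%C.
Proof.
  unfold L2dot. rewrite (cint_Lambda_ext _ (fun _ => 0%C)); [apply cint_Lambda_zero|intros; ring].
Qed.

Lemma L2dot_conj x y : cont_Lambda x -> cont_Lambda y -> L2dot x y = Cconj (L2dot y x).
Proof.
  intros. unfold L2dot. rewrite <- cint_Lambda_conj; auto using cont_Lambda_mul_conj.
  apply cint_Lambda_ext. intros. apply injective_projections; simpl; ring.
Qed.

Lemma L2dot_self_ge0 x : cont_Lambda x -> 0 <= fst (L2dot x x).
Proof.
  intros Hx. apply RInt_ge_0; [lra| |intros; simpl; nra].
  apply ex_RInt_cont_on; [lra|exact (proj1 (cont_Lambda_mul_conj x x Hx Hx))].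
Qed.

Definition fun_space : inner_space (R -> C) :=
  InnerSpace (R -> C) cont_Lambda (fun x y t => Cplus (x t) (y t)) (fun a x t => Cmult a (x t))
    (fun _ => 0%C) L2dot cont_Lambda_plus cont_Lambda_scal cont_Lambda_zero
    L2dot_add_l L2dot_scal_l (fun z _ => L2dot_zero_l z) L2dot_conj L2dot_self_ge0.

Lemma sp_sum_fun_space F n t : sp_sum fun_space F n t = csum (fun j => F j t) n.
Proof. induction n as [|n IH]; simpl; auto. rewrite IH; auto. Qed.

Lemma L2norm_sqnorm h : L2norm h = sqrt (sp_sqnorm fun_space h).
Proof.
  unfold L2norm, sp_sqnorm, fun_space. cbn [sp_ip]. unfold L2dot, cint_Lambda. cbn [fst].
  f_equal. apply RInt_ext. intros; rewrite Cmod_sqr; simpl; ring.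
Qed.

Lemma L2norm_ext h h' : (forall t, -1 <= t <= 1 -> h t = h' t) -> L2norm h = L2norm h'.
Proof.
  intros H. unfold L2norm. f_equal. apply RInt_ext. intros x Hx.
  rewrite Rmin_left, Rmax_right in Hx by lra. rewrite H; auto; lra.
Qed.

Lemma L2norm_sqr h : cont_Lambda h -> L2norm h ^ 2 = RInt (fun t => Cmod (h t) ^ 2) (-1) 1.
Proof.
  intros Hh. unfold L2norm. rewrite pow2_sqrt; auto.
  apply RInt_ge_0; [lra| |intros; apply pow2_ge_0].
  apply ex_RInt_cont_on, cont_on_Cmod_sqr; auto; lra.
Qed.

Lemma synth_cont N T c : 0 < T -> cont_Lambda (synth N T c).
Proof. intros HT. destruct (synth_poly N T c HT). split; eapply cont_on_poly; eauto; lra. Qed.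

Lemma interpN_cont N g : cont_Lambda (interpN N g).
Proof.
  split.
  - apply cont_on_ext with (lagrange_interp N (fun x => fst (g x)));
      [lra|intros; symmetry; apply Re_interpN|eapply cont_on_poly; [lra|apply lagrange_interp_poly]].
  - apply cont_on_ext with (lagrange_interp N (fun x => snd (g x)));
      [lra|intros; symmetry; apply Im_interpN|eapply cont_on_poly; [lra|apply lagrange_interp_poly]].
Qed.

Section TSVD.
Variables (N : nat) (T : R) (r : nat) (sig : nat -> R) (v : nat -> nat -> C) (u : nat -> R -> C).
Hypotheses (HT : 0 < T) (HS : is_SVD N T r sig v u).

Lemma svd_sig_pos j : (j < r)%nat -> 0 < sig j.
Proof. apply HS. Qed.

Lemma svd_right_orthonormal : sp_orthonormal (vec_space N) v r.
Proof.
  destruct HS as [_ [Hv _]]. split; [intros; exact I|].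
  intros i j Hi Hj. simpl. rewrite Hv, Nat.eqb_sym; auto.
Qed.

Lemma synth_right_sing j t : (j < r)%nat -> -1 <= t <= 1 ->
  synth N T (v j) t = Cmult (RtoC (sig j)) (u j t).
Proof.
  intros Hj Ht. destruct HS as [_ [Hv [_ Hid]]]. rewrite Hid, (csum_delta _ _ j), Hv, Nat.eqb_refl; auto.
  - ring.
  - intros i Hi Hij. rewrite Hv; auto. destruct (Nat.eqb_spec i j); [lia|ring].
Qed.

Lemma left_sing_cont j : (j < r)%nat -> cont_Lambda (u j).
Proof.
  intros Hj. assert (Hs := svd_sig_pos j Hj).
  apply cont_Lambda_ext with (fun t => Cmult (RtoC (/ sig j)) (synth N T (v j) t)).
  - intros t Ht. rewrite synth_right_sing, RtoC_inv; auto; [|lra]. field.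
    intros E. apply RtoC_inj in E. lra.
  - apply cont_Lambda_scal, synth_cont; auto.
Qed.

Lemma svd_left_orthonormal : sp_orthonormal fun_space u r.
Proof. destruct HS as [_ [_ [Hu _]]]. split; [apply left_sing_cont|apply Hu]. Qed.

Lemma synth_svd_sum c t : -1 <= t <= 1 ->
  synth N T c t =
  sp_sum fun_space (fun j => sp_scal fun_space (Cmult (RtoC (sig j)) (vdot N (v j) c)) (u j)) r t.
Proof.
  intros Ht. destruct HS as [_ [_ [_ Hid]]]. rewrite Hid, sp_sum_fun_space; auto.
  apply csum_ext; intros; simpl; ring.
Qed.

Lemma L2dot_synth_left_sing c j : (j < r)%nat ->
  L2dot (synth N T c) (u j) = Cmult (RtoC (sig j)) (vdot N (v j) c).
Proof.
  intros Hj. rewrite (L2dot_ext_l _ _ _ (fun t => synth_svd_sum c t)).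
  exact (sp_ip_sum_orthonormal fun_space u r (fun j => Cmult (RtoC (sig j)) (vdot N (v j) c)) j
           svd_left_orthonormal Hj).
Qed.

(* For [z = g - L_N c], the residual of the TSVD splits into the part of [z] orthogonal to
   the retained singular vectors and the part of [L_N c] along the discarded ones. *)
Lemma tsvd_residual_split eps g c t : cont_Lambda g -> -1 <= t <= 1 ->
  let z := fun t => Cminus (g t) (synth N T c t) in
  let d := fun j => if Rlt_dec eps (sig j) then true else false in
  Cminus (g t) (TSVD N T eps r sig v u g t) =
  sp_add fun_space
    (sp_sub fun_space z (sp_sum fun_space (fun j => sp_scal fun_space
       (if d j then L2dot z (u j) else 0%C) (u j)) r))
    (sp_sum fun_space (fun j => sp_scal fun_space
       (if d j then 0%C else Cmult (RtoC (sig j)) (vdot N (v j) c)) (u j)) r) t.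
Proof.
  intros Hg Ht z d. cbn [sp_add sp_sub fun_space]. unfold sp_sub. cbn [sp_add sp_scal].
  rewrite !sp_sum_fun_space. unfold z at 1. rewrite synth_svd_sum, sp_sum_fun_space; auto.
  unfold TSVD. cbn [sp_scal fun_space]. rewrite sp_sum_fun_space.
  set (A := fun j => Cmult (if d j then L2dot z (u j) else 0%C) (u j t)).
  set (B := fun j => Cmult (if d j then 0%C else Cmult (RtoC (sig j)) (vdot N (v j) c)) (u j t)).
  set (S' := fun j => Cmult (Cmult (RtoC (sig j)) (vdot N (v j) c)) (u j t)).
  rewrite (csum_ext _ (fun j => Cplus (A j) (Cplus (S' j) (Copp (B j))))), !csum_plus, csum_opp;
    [simpl; ring|].
  intros j Hj. assert (Hs := svd_sig_pos j Hj). unfold A, B, S', d.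
  rewrite synth_right_sing; auto. destruct (Rlt_dec eps (sig j)); [|ring].
  replace (L2dot g (u j)) with (Cplus (L2dot z (u j)) (L2dot (synth N T c) (u j))).
  - rewrite L2dot_synth_left_sing; auto.
    rewrite RtoC_inv by lra. field. intros E. apply RtoC_inj in E. lra.
  - rewrite <- L2dot_add_l; auto using synth_cont, left_sing_cont.
    + apply L2dot_ext_l. intros; unfold z; ring.
    + apply cont_Lambda_minus; auto using synth_cont.
Qed.

(* Bessel's inequality in [C^(N+1)] gives [sum_j |v_j^* c|^2 <= ||c||^2]. *)
Lemma tsvd_discarded_le eps c (d : nat -> bool) :
  (forall j, (j < r)%nat -> d j = false -> sig j <= eps) ->
  sp_sqnorm fun_space (sp_sum fun_space (fun j => sp_scal fun_space
    (if d j then 0%C else Cmult (RtoC (sig j)) (vdot N (v j) c)) (u j)) r)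
  <= eps * eps * sp_sqnorm (vec_space N) c.
Proof.
  intros Hd. rewrite sp_sqnorm_sum_orthonormal; [|apply svd_left_orthonormal].
  eapply Rle_trans; [|apply Rmult_le_compat_l;
    [nra|exact (sp_bessel (vec_space N) c v r I svd_right_orthonormal)]].
  rewrite <- rsum_scal. apply rsum_le. intros j Hj. assert (Hs := svd_sig_pos j Hj). simpl.
  destruct (d j) eqn:Edj.
  - rewrite Cmod_0, Rmult_0_l. apply Rmult_le_pos; [nra|apply pow2_ge_0].
  - rewrite Cmod_mult, Cmod_R, Rabs_pos_eq, !Rmult_1_r; [|lra].
    assert (0 <= Cmod (vdot N (v j) c)) by apply Cmod_ge_0.
    assert (sig j * sig j <= eps * eps) by (specialize (Hd j Hj Edj); nra).
    nra.
Qed.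

Lemma tsvd_error_le eps g c : 0 < eps -> cont_Lambda g ->
  L2norm (fun t => Cminus (g t) (TSVD N T eps r sig v u g t)) <=
  L2norm (fun t => Cminus (g t) (synth N T c t)) + eps * vnorm N c.
Proof.
  intros He Hg. set (z := fun t => Cminus (g t) (synth N T c t)).
  assert (Hz : cont_Lambda z) by (apply cont_Lambda_minus; auto using synth_cont).
  assert (Hu := svd_left_orthonormal). destruct Hu as [Hum _].
  rewrite (L2norm_ext _ _ (fun t Ht => tsvd_residual_split eps g c t Hg Ht)), L2norm_sqnorm.
  eapply Rle_trans; [apply sp_norm_triangle|apply Rplus_le_compat].
  - apply sp_mem_sub; auto. apply sp_mem_sum. intros; apply sp_mem_scal; auto.
  - apply sp_mem_sum. intros; apply sp_mem_scal; auto.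
  - rewrite L2norm_sqnorm. apply sqrt_le_1_alt, sp_bessel_masked_le; auto using svd_left_orthonormal.
  - replace (eps * vnorm N c) with (sqrt (eps * eps * sp_sqnorm (vec_space N) c)).
    + apply sqrt_le_1_alt, tsvd_discarded_le; auto.
      intros j _. destruct (Rlt_dec eps (sig j)); [discriminate|lra].
    + rewrite vnorm_sqnorm, sqrt_mult_alt, sqrt_square; [ring|lra|nra].
Qed.
End TSVD.

Lemma cont_Lambda_csum F n : (forall j, (j < n)%nat -> cont_Lambda (F j)) ->
  cont_Lambda (fun t => csum (fun j => F j t) n).
Proof.
  induction n as [|n IH]; intros H; [apply cont_Lambda_zero|].
  apply cont_Lambda_plus; [apply IH; auto|apply H; lia].
Qed.

Lemma TSVD_cont N T eps r sig v u g : 0 < T -> cont_Lambda (TSVD N T eps r sig v u g).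
Proof.
  intros HT. apply cont_Lambda_csum. intros j _. destruct (Rlt_dec eps (sig j)); [|apply cont_Lambda_zero].
  apply cont_Lambda_ext with (fun t => Cmult (Cmult (RtoC (/ sig j)) (L2dot g (u j))) (synth N T (v j) t));
    [intros; ring|apply cont_Lambda_scal, synth_cont; auto].
Qed.

Lemma RInt_affine_Lambda (H : R -> R) c s : 0 < s -> cont_on (-1) 1 H ->
  ex_RInt (fun x => H ((x - c) / s)) (c - s) (c + s) /\
  RInt (fun x => H ((x - c) / s)) (c - s) (c + s) = s * RInt H (-1) 1.
Proof.
  intros Hs HH.
  assert (Hcont : forall w, continuous (fun x => H (clamp (-1) 1 ((x - c) / s))) w).
  { intros w. apply (continuous_comp (fun x => (x - c) / s) (fun y => H (clamp (-1) 1 y))); [|apply HH].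
    apply (ex_derive_continuous (K:=R_AbsRing) (V:=R_NormedModule)). auto_derive; auto. }
  assert (Hin : forall x, Rmin (c - s) (c + s) < x < Rmax (c - s) (c + s) ->
            H (clamp (-1) 1 ((x - c) / s)) = H ((x - c) / s)).
  { intros x Hx. rewrite Rmin_left, Rmax_right in Hx by lra. rewrite clamp_id; auto.
    split; [apply Rmult_le_reg_r with s|apply Rmult_le_reg_r with s]; auto; field_simplify; lra. }
  assert (Hex : ex_RInt (fun x => H ((x - c) / s)) (c - s) (c + s)).
  { eapply ex_RInt_ext; [exact Hin|]. apply (ex_RInt_continuous (V:=R_CompleteNormedModule)). auto. }
  split; auto.
  replace (c - s) with (s * -1 + c) in * by ring. replace (c + s) with (s * 1 + c) in * by ring.
  rewrite <- RInt_comp_lin, <- (RInt_scal H); auto.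
  - apply RInt_ext. intros x _. unfold scal; simpl; unfold mult; simpl. f_equal. f_equal. field. lra.
  - apply ex_RInt_cont_on; auto. lra.
Qed.

Lemma cont_on_Cm_closed m a b F : a <= b -> Cm_closed m a b F -> cont_on a b F.
Proof. intros Hab [H _]. apply cont_on_within; auto. Qed.

Lemma Derive_n_affine F c s a b n x :
  (forall k y, (k <= n)%nat -> a < y < b -> ex_derive_n F k y) -> a < c + s * x < b ->
  (forall k, (k <= n)%nat -> ex_derive_n (fun t => F (c + s * t)) k x) /\
  Derive_n (fun t => F (c + s * t)) n x = s ^ n * Derive_n F n (c + s * x).
Proof.
  intros HD Hx. set (H := fun y => F (y + c)).
  assert (Eq : forall t, F (c + s * t) = H (s * t)) by (intros; unfold H; f_equal; ring).
  assert (Loc : locally (s * x) (fun y => forall k, (k <= n)%nat -> ex_derive_n H k y)).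
  { generalize (locally_open_interval (a - c) (b - c) (s * x) ltac:(lra)). apply filter_imp.
    intros y Hy k Hk. apply ex_derive_n_comp_trans, HD; [lia|lra]. }
  split.
  - intros k Hk. apply (ex_derive_n_ext (fun t => H (s * t))); [intros; rewrite Eq; auto|].
    apply ex_derive_n_comp_scal. apply filter_imp with (2 := Loc). intros y Hy j Hj. apply Hy; lia.
  - rewrite (Derive_n_ext _ _ n x Eq), Derive_n_comp_scal; auto.
    unfold H. rewrite Derive_n_comp_trans. do 2 f_equal. ring.
Qed.

Lemma interp_affine_error N F a b c s M t : (1 <= N)%nat -> 0 < s -> a <= c - s -> c + s <= b ->
  cont_on a b F -> (forall k y, (k <= S N)%nat -> a < y < b -> ex_derive_n F k y) ->
  (forall y, a < y < b -> Rabs (Derive_n F (S N) y) <= M) -> -1 <= t <= 1 ->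
  Rabs (F (c + s * t) - lagrange_interp N (fun t => F (c + s * t)) t)
    <= M * (2 * s / INR N) ^ (S N) / INR (S N).
Proof.
  intros HN Hs H1 H2 HF HFd HM Ht.
  assert (Hin : forall x, -1 < x < 1 -> a < c + s * x < b) by (intros; nra).
  eapply Rle_trans; [apply (lagrange_interp_error_nodes N (fun t => F (c + s * t)) (s ^ S N * M)); auto|].
  - apply (cont_on_affine a b); auto; lra.
  - intros k x Hk Hx. apply (Derive_n_affine F c s a b (S N)); auto.
  - intros x Hx. rewrite (proj2 (Derive_n_affine F c s a b (S N) x HFd (Hin x Hx))).
    rewrite Rabs_mult, Rabs_pos_eq; [|apply pow_le; lra].
    apply Rmult_le_compat_l; [apply pow_le; lra|auto].
  - right. unfold Rdiv. rewrite !Rpow_mult_distr. ring.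
Qed.

Lemma hI_ge_width ap K k : (1 <= k <= K)%nat -> ap k - ap (k - 1)%nat <= hI ap K.
Proof.
  induction K as [|K IH]; intros Hk; [lia|]. destruct K as [|K]; [replace k with 1%nat by lia; simpl; lra|].
  change (hI ap (S (S K))) with (Rmax (hI ap (S K)) (ap (S (S K)) - ap (S K))).
  destruct (Nat.eq_dec k (S (S K))) as [->|].
  - replace (S (S K) - 1)%nat with (S K) by lia. apply Rmax_r.
  - eapply Rle_trans; [apply IH; lia|apply Rmax_l].
Qed.

Lemma seg_index_correct ap K k x : (forall k, (1 <= k <= K)%nat -> ap (k - 1)%nat < ap k) ->
  (1 <= k <= K)%nat -> ap (k - 1)%nat < x <= ap k -> seg_index ap K x = k.
Proof.
  induction K as [|K IH]; intros Hinc Hk Hx; [lia|]. destruct K as [|K]; [simpl; lia|].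
  change (seg_index ap (S (S K)) x) with (if Rle_dec x (ap (S K)) then seg_index ap (S K) x else S (S K)).
  destruct (Rle_dec x (ap (S K))).
  - destruct (Nat.eq_dec k (S (S K))) as [->|]; [|apply IH; auto; [intros; apply Hinc|]; lia].
    replace (S (S K) - 1)%nat with (S K) in Hx by lia. lra.
  - destruct (Nat.eq_dec k (S (S K))); auto. exfalso.
    assert (ap k <= ap (S K)); [|lra].
    apply (increasing_le ap (S K)); [|lia]. intros i Hi.
    generalize (Hinc (S i) ltac:(lia)). simpl. rewrite Nat.sub_0_r. auto.
Qed.

Section Partition.
Variables (a b : R) (K : nat) (ap : nat -> R).
Hypotheses (Ha : ap 0%nat = a) (Hb : ap K = b)
  (Hinc : forall k, (1 <= k <= K)%nat -> ap (k - 1)%nat < ap k).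

Lemma ap_le i j : (i <= j <= K)%nat -> ap i <= ap j.
Proof.
  apply increasing_le. intros i' Hi. specialize (Hinc (S i') ltac:(lia)).
  simpl in Hinc. rewrite Nat.sub_0_r in Hinc. auto.
Qed.

Lemma ap_in i : (i <= K)%nat -> a <= ap i <= b.
Proof. intros. rewrite <- Ha, <- Hb. split; apply ap_le; lia. Qed.

Lemma a_lt_b : (1 <= K)%nat -> a < b.
Proof.
  intros HK.
  rewrite <- Ha, <- Hb. apply Rlt_le_trans with (ap 1%nat); [apply (Hinc 1%nat); lia|apply ap_le; lia].
Qed.

Lemma sk_pos k : (1 <= k <= K)%nat -> 0 < sk ap k.
Proof. intros Hk. unfold sk. generalize (Hinc k Hk). lra. Qed.

Lemma ck_sub_sk k : ck ap k - sk ap k = ap (k - 1)%nat.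
Proof. unfold ck, sk. field. Qed.

Lemma ck_add_sk k : ck ap k + sk ap k = ap k.
Proof. unfold ck, sk. field. Qed.

End Partition.

Lemma gk_cont a b K ap m f k : (1 <= K)%nat -> ap 0%nat = a -> ap K = b ->
  (forall k, (1 <= k <= K)%nat -> ap (k - 1)%nat < ap k) -> Cm_closed_C m a b f ->
  (1 <= k <= K)%nat -> cont_Lambda (gk f ap k).
Proof.
  intros HK Ha Hb Hinc Hf Hk. assert (Hs := sk_pos K ap Hinc k Hk).
  assert (Hab := a_lt_b a b K ap Ha Hb Hinc HK).
  assert (Hlo : a <= ck ap k - sk ap k) by (rewrite ck_sub_sk; apply (ap_in a b K ap Ha Hb Hinc); lia).
  assert (Hhi : ck ap k + sk ap k <= b) by (rewrite ck_add_sk; apply (ap_in a b K ap Ha Hb Hinc); lia).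
  destruct Hf as [Hre Him]. split.
  - apply (cont_on_affine a b (fun y => fst (f y))); try lra. eapply cont_on_Cm_closed; eauto; lra.
  - apply (cont_on_affine a b (fun y => snd (f y))); try lra. eapply cont_on_Cm_closed; eauto; lra.
Qed.

Section PiecewiseInterpolation.
Variables (a b : R) (K : nat) (ap : nat -> R) (N : nat) (Cf : R) (f : R -> C).
Hypotheses (HK : (1 <= K)%nat) (Ha : ap 0%nat = a) (Hb : ap K = b)
  (Hinc : forall k, (1 <= k <= K)%nat -> ap (k - 1)%nat < ap k) (HN : (1 <= N)%nat)
  (Hf : Cm_closed_C (N + 1) a b f)
  (HCf : forall x, a < x < b -> Cmod (DeriveC_n f (N + 1) x) <= Cf).

Lemma Cf_ge0 : 0 <= Cf.
Proof.
  assert (Hab := a_lt_b a b K ap Ha Hb Hinc HK).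
  apply Rle_trans with (2 := HCf ((a + b) / 2) ltac:(lra)), Cmod_ge_0.
Qed.

Lemma part_interp_error F k t : Cm_closed (N + 1) a b F ->
  (forall y, a < y < b -> Rabs (Derive_n F (S N) y) <= Cf) -> (1 <= k <= K)%nat -> -1 <= t <= 1 ->
  Rabs (F (ck ap k + sk ap k * t) - lagrange_interp N (fun t => F (ck ap k + sk ap k * t)) t)
    <= (hI ap K / INR N) ^ (S N) * Cf / 2.
Proof.
  intros HF HFb Hk Ht. assert (Hs := sk_pos K ap Hinc k Hk). assert (HC := Cf_ge0).
  assert (HNp : 0 < INR N) by (apply lt_0_INR; lia).
  assert (H2 : 2 <= INR (S N)) by (rewrite S_INR; apply (le_INR 1) in HN; simpl in HN; lra).
  assert (Hpow : 0 <= (2 * sk ap k / INR N) ^ S N <= (hI ap K / INR N) ^ S N).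
  { split; [apply pow_le, Rdiv_le_0_compat; lra|]. apply pow_incr. split; [apply Rdiv_le_0_compat; lra|].
    unfold Rdiv. apply Rmult_le_compat_r; [left; apply Rinv_0_lt_compat; auto|].
    generalize (hI_ge_width ap K k Hk). unfold sk. lra. }
  eapply Rle_trans; [apply (interp_affine_error N F a b); auto|].
  - rewrite ck_sub_sk. apply (ap_in a b K ap Ha Hb Hinc); lia.
  - rewrite ck_add_sk. apply (ap_in a b K ap Ha Hb Hinc); lia.
  - apply (cont_on_Cm_closed (N + 1)); auto. generalize (a_lt_b a b K ap Ha Hb Hinc HK). lra.
  - intros j y Hj Hy. apply HF; auto. lia.
  - unfold Rdiv at 2 3. rewrite (Rmult_comm ((hI ap K / INR N) ^ S N)).
    apply Rmult_le_compat; [nra|left; apply Rinv_0_lt_compat; lra|nra|apply Rinv_le_contravar; lra].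
Qed.

Lemma gk_interp_error k t : (1 <= k <= K)%nat -> -1 <= t <= 1 ->
  Cmod (Cminus (gk f ap k t) (interpN N (gk f ap k) t)) <= (hI ap K / INR N) ^ (S N) * Cf.
Proof.
  intros Hk Ht. destruct Hf as [Hre Him].
  assert (HD : forall y, a < y < b -> Cmod (DeriveC_n f (N + 1) y) <= Cf) by auto.
  replace (N + 1)%nat with (S N) in HD by lia.
  eapply Rle_trans; [apply Cmod_le_Rabs_Re_Im|].
  change (fst (Cminus ?x ?y)) with (fst x - fst y). change (snd (Cminus ?x ?y)) with (snd x - snd y).
  rewrite Re_interpN, Im_interpN. unfold gk.
  apply Rle_trans with ((hI ap K / INR N) ^ (S N) * Cf / 2 + (hI ap K / INR N) ^ (S N) * Cf / 2); [|lra].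
  apply Rplus_le_compat; [apply (part_interp_error (fun y => fst (f y)))
                         |apply (part_interp_error (fun y => snd (f y)))]; auto;
    intros y Hy; apply Rle_trans with (2 := HD y Hy);
    [apply (Rabs_Re_le_Cmod (DeriveC_n f (S N) y))|apply (Rabs_Im_le_Cmod (DeriveC_n f (S N) y))].
Qed.

Lemma gk_interp_L2_error k : (1 <= k <= K)%nat ->
  L2norm (fun t => Cminus (gk f ap k t) (interpN N (gk f ap k) t))
    <= sqrt 2 * (hI ap K ^ (N + 1) / INR N ^ (N + 1)) * Cf.
Proof.
  intros Hk. assert (HNp : 0 < INR N) by (apply lt_0_INR; lia).
  assert (HhI : 0 <= hI ap K) by (generalize (hI_ge_width ap K k Hk) (Hinc k Hk); lra).
  set (B := (hI ap K / INR N) ^ (S N) * Cf).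
  assert (HB : 0 <= B) by (apply Rmult_le_pos; [apply pow_le, Rdiv_le_0_compat; lra|apply Cf_ge0]).
  replace (sqrt 2 * (hI ap K ^ (N + 1) / INR N ^ (N + 1)) * Cf) with (sqrt (RInt (fun _ => B ^ 2) (-1) 1)).
  - unfold L2norm. apply sqrt_le_1_alt, RInt_le; [lra| |apply ex_RInt_const|].
    + assert (Hg := gk_cont a b K ap (N + 1) f k HK Ha Hb Hinc Hf Hk).
      apply ex_RInt_cont_on; [lra|]. apply cont_on_Cmod_sqr, cont_Lambda_minus; auto using interpN_cont.
    + intros x Hx. apply pow_incr. split; [apply Cmod_ge_0|apply gk_interp_error; auto; lra].
  - rewrite RInt_const. unfold scal; simpl; unfold mult; simpl.
    replace ((1 - -1) * (B * (B * 1))) with (2 * (B * B)) by ring.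
    rewrite sqrt_mult_alt, sqrt_square; [|lra|lra].
    unfold B. replace (N + 1)%nat with (S N) by lia. unfold Rdiv. rewrite Rpow_mult_distr, pow_inv. ring.
Qed.
End PiecewiseInterpolation.

Section PiecewiseTSVD.
Variables (K : nat) (ap : nat -> R) (N : nat) (T eps : R) (r : nat) (sig : nat -> R)
  (v : nat -> nat -> C) (u : nat -> R -> C) (f : R -> C).
Hypotheses (Hinc : forall k, (1 <= k <= K)%nat -> ap (k - 1)%nat < ap k) (HT : 0 < T)
  (Hgk : forall k, (1 <= k <= K)%nat -> cont_Lambda (gk f ap k)).

Lemma RInt_Pfrm_piece k : (1 <= k <= K)%nat ->
  let E := fun x => Cmod (Cminus (f x) (Pfrm N T eps r sig v u f ap K x)) ^ 2 in
  ex_RInt E (ap (k - 1)%nat) (ap k) /\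
  RInt E (ap (k - 1)%nat) (ap k)
    = sk ap k * L2norm (fun t => Cminus (gk f ap k t) (TSVD N T eps r sig v u (gk f ap k) t)) ^ 2.
Proof.
  intros Hk E. assert (Hs := sk_pos K ap Hinc k Hk).
  set (e := fun t => Cminus (gk f ap k t) (TSVD N T eps r sig v u (gk f ap k) t)).
  assert (He : cont_Lambda e) by (apply cont_Lambda_minus; auto using TSVD_cont).
  set (H := fun t => Cmod (e t) ^ 2).
  assert (HH : cont_on (-1) 1 H) by (apply cont_on_Cmod_sqr; auto).
  destruct (RInt_affine_Lambda H (ck ap k) (sk ap k) Hs HH) as [Hex Heq].
  rewrite ck_sub_sk, ck_add_sk in Hex, Heq.
  assert (Hin : forall x, Rmin (ap (k - 1)%nat) (ap k) < x < Rmax (ap (k - 1)%nat) (ap k) ->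
            H ((x - ck ap k) / sk ap k) = E x).
  { intros x Hx. assert (Hlt := Hinc k Hk). rewrite Rmin_left, Rmax_right in Hx by lra.
    unfold H, E, e, Pfrm, gk. rewrite (seg_index_correct ap K k x); auto; [|lra].
    replace (ck ap k + sk ap k * ((x - ck ap k) / sk ap k)) with x by (field; lra). reflexivity. }
  split; [exact (ex_RInt_ext (fun x => H ((x - ck ap k) / sk ap k)) E _ _ Hin Hex)|].
  rewrite <- (RInt_ext (fun x => H ((x - ck ap k) / sk ap k)) E _ _ Hin), Heq, L2norm_sqr; auto.
Qed.

Lemma RInt_Pfrm_partition m : (m <= K)%nat ->
  let E := fun x => Cmod (Cminus (f x) (Pfrm N T eps r sig v u f ap K x)) ^ 2 in
  ex_RInt E (ap 0%nat) (ap m) /\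
  RInt E (ap 0%nat) (ap m) = rsum (fun j => sk ap (S j) *
    L2norm (fun t => Cminus (gk f ap (S j) t) (TSVD N T eps r sig v u (gk f ap (S j)) t)) ^ 2) m.
Proof.
  intros Hm E. induction m as [|m IH].
  - split; [apply ex_RInt_point|apply (RInt_point (V:=R_CompleteNormedModule))].
  - destruct IH as [Hex Heq]; [lia|]. destruct (RInt_Pfrm_piece (S m)) as [Hex' Heq']; [lia|].
    replace (S m - 1)%nat with m in Hex', Heq' by lia.
    split; [apply (ex_RInt_Chasles E _ (ap m)); auto|].
    rewrite <- (RInt_Chasles E _ (ap m)), Heq; auto. unfold E. rewrite Heq'. reflexivity.
Qed.
End PiecewiseTSVD.

Theorem corollary2p3
  (a b : R) (K : nat) (ap : nat -> R) (N : nat) (T eps Cf : R) (f : R -> C)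
  (r : nat) (sig : nat -> R) (v : nat -> nat -> C) (u : nat -> R -> C) :
  (1 <= K)%nat -> ap 0%nat = a -> ap K = b ->
  (forall k, (1 <= k <= K)%nat -> ap (k - 1)%nat < ap k) ->
  1 < T -> 0 < eps -> (1 <= N)%nat ->
  Cm_closed_C (N + 1) a b f ->
  (forall x, a < x < b -> Cmod (DeriveC_n f (N + 1) x) <= Cf) ->
  is_SVD N T r sig v u ->
  exists cint : nat -> nat -> C,
    (forall k, (1 <= k <= K)%nat ->
       (forall t, -1 <= t <= 1 -> interpN N (gk f ap k) t = synth N T (cint k) t) /\
       L2norm (fun t => Cminus (gk f ap k t) (TSVD N T eps r sig v u (gk f ap k) t))
         <= L2norm (fun t => Cminus (gk f ap k t) (interpN N (gk f ap k) t))
            + eps * vnorm N (cint k) /\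
       L2norm (fun t => Cminus (gk f ap k t) (interpN N (gk f ap k) t))
            + eps * vnorm N (cint k)
         <= sqrt 2 * (hI ap K ^ (N + 1) / INR N ^ (N + 1)) * Cf + eps * vnorm N (cint k)) /\
    RInt (fun x => Cmod (Cminus (f x) (Pfrm N T eps r sig v u f ap K x)) ^ 2) a b
      <= rsum (fun j => sk ap (S j) *
                 (sqrt 2 * (hI ap K ^ (N + 1) / INR N ^ (N + 1)) * Cf
                  + eps * vnorm N (cint (S j))) ^ 2) K.
Proof.
  intros HK Ha Hb Hinc HT He HN Hf HCf HS.
  assert (HT0 : 0 < T) by lra.
  destruct (choice (fun k c => forall t, interpN N (gk f ap k) t = synth N T c t)) as [cint Hcint].
  { intros k. apply interpN_synth; auto. }
  assert (Hgk : forall k, (1 <= k <= K)%nat -> cont_Lambda (gk f ap k))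
    by (intros; apply (gk_cont a b K ap (N + 1) f); auto).
  assert (Hk : forall k, (1 <= k <= K)%nat ->
    L2norm (fun t => Cminus (gk f ap k t) (TSVD N T eps r sig v u (gk f ap k) t))
      <= L2norm (fun t => Cminus (gk f ap k t) (interpN N (gk f ap k) t)) + eps * vnorm N (cint k) /\
    L2norm (fun t => Cminus (gk f ap k t) (interpN N (gk f ap k) t)) + eps * vnorm N (cint k)
      <= sqrt 2 * (hI ap K ^ (N + 1) / INR N ^ (N + 1)) * Cf + eps * vnorm N (cint k)).
  { intros k Hk. split.
    - rewrite (L2norm_ext (fun t => Cminus (gk f ap k t) (interpN N (gk f ap k) t))
                          (fun t => Cminus (gk f ap k t) (synth N T (cint k) t)));
        [apply tsvd_error_le; auto|intros; rewrite Hcint; auto].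
    - apply Rplus_le_compat_r, (gk_interp_L2_error a b K ap N Cf f); auto. }
  exists cint. split; [intros k Hk'; split; [intros; apply Hcint|apply Hk; auto]|].
  rewrite <- Ha, <- Hb, (proj2 (RInt_Pfrm_partition K ap N T eps r sig v u f Hinc HT0 Hgk K (le_n K))).
  apply rsum_le. intros j Hj. destruct (Hk (S j)) as [H1 H2]; [lia|].
  apply Rmult_le_compat_l; [left; apply (sk_pos K ap Hinc); lia|].
  apply pow_incr. split; [apply sqrt_pos|lra].
Qed.
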